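(* Let $0<r\le1$ and $0<\alpha\le\frac12$. Let $a:\mathbb{Z}^n\to\mathbb{C}$ satisfy $|a(\xi)|\le C\langle\xi\rangle^m$ for all $\xi\in\mathbb{Z}^n$. Assume $1<p_1\le2$, $q_1=(\alpha+\frac1{p_1'})^{-1}$, and $m<-\frac nr-\alpha n$. Then the Fourier multiplier $T_a$ is $r$-nuclear on $B^w_{p_1,q_1}(\mathbb{T}^n)$ for every $w\in\mathbb{R}$, and its nuclear trace is $\mathrm{Tr}(T_a)=\sum_{\xi\in\mathbb{Z}^n}a(\xi)$.
   Context: $\widehat f(\xi)=\int_{\mathbb{T}^n}e^{-i2\pi x\cdot\xi}f(x)dx$, $\langle\xi\rangle=(1+|\xi|^2)^{1/2}$. $T_au(x)=\sum_{\xi\in\mathbb{Z}^n}e^{i2\pi x\cdot\xi}a(\xi)\widehat u(\xi)$. Periodic Besov spaces: $\|f\|_{B^w_{p,q}}=\big(\sum_{m\ge0}2^{mwq}\|\sum_{2^m\le|\xi|<2^{m+1}}e^{i2\pi x\cdot\xi}\widehat f(\xi)\|^q_{L^p(\mathbb{T}^n)}\big)^{1/q}$. $p'$ is the conjugate exponent. $T:E\to E$ is $r$-nuclear if $T=\sum_ne'_n(\cdot)y_n$ with $\sum_n\|e'_n\|^r_{E'}\|y_n\|^r_E<\infty$; on a space with the approximation property its nuclear trace is $\sum_ne'_n(y_n)$. *)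

From Stdlib Require Import Reals ZArith List.
From Coquelicot Require Export Coquelicot.
Import ListNotations.
Open Scope R_scope.

(* Points of Z^n are lists of integers of length n; points of T^n = [0,1)^n
   are lists of reals of length n. *)

(* x^y for x >= 0, with 0^y = 0 (y > 0 in all uses). *)
Definition rpow (x y : R) : R := if Rlt_dec 0 x then Rpower x y else 0.

(* iterated integral over [0,1]^n (Lebesgue measure on T^n) *)
Fixpoint intT (n : nat) (f : list R -> R) : R :=
  match n with
  | O => f nil
  | S k => RInt (fun t => intT k (fun y => f (t :: y))) 0 1
  end.

Fixpoint dotRZ (x : list R) (xi : list Z) : R :=
  match x, xi with
  | a :: x', b :: xi' => a * IZR b + dotRZ x' xi'
  | _, _ => 0
  end.

Definition normsq (xi : list Z) : Z := fold_right (fun z acc => (z * z + acc)%Z) 0%Z xi.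

(* <xi> = (1+|xi|^2)^(1/2), and <xi>^m *)
Definition japbr_pow (xi : list Z) (m : R) : R := Rpower (1 + IZR (normsq xi)) (m / 2).

Fixpoint box (n N : nat) : list (list Z) :=
  match n with
  | O => [nil]
  | S k => flat_map (fun z => map (cons z) (box k N))
             (map (fun j => (Z.of_nat j - Z.of_nat N)%Z) (seq 0 (2 * N + 1)))
  end.

(* dyadic block m: 2^m <= |xi| < 2^(m+1); block 0 also contains |xi| < 1
   (i.e. xi = 0) *)
Definition block (m : nat) (xi : list Z) : bool :=
  match m with
  | O => (normsq xi <? 4)%Z
  | S _ => andb (4 ^ Z.of_nat m <=? normsq xi)%Z (normsq xi <? 4 ^ Z.of_nat (S m))%Z
  end.

Definition cexp2pi (t : R) : C := (cos (2 * PI * t), sin (2 * PI * t)).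

(* periodic distributions are represented by their Fourier coefficients
   c : Z^n -> C ; the m-th dyadic piece sum_{block m} e^{i2pi x.xi} c(xi) *)
Definition blockpoly (n : nat) (c : list Z -> C) (m : nat) (x : list R) : C :=
  fold_right Cplus 0%C
    (map (fun xi => Cmult (cexp2pi (dotRZ x xi)) (c xi))
       (filter (block m) (box n (2 ^ (S m))))).

Definition Lpnorm (n : nat) (p : R) (g : list R -> C) : R :=
  rpow (intT n (fun x => rpow (Cmod (g x)) p)) (/ p).

Definition besov_term (n : nat) (w p q : R) (c : list Z -> C) (m : nat) : R :=
  Rpower 2 (INR m * w * q) * rpow (Lpnorm n p (blockpoly n c m)) q.

Definition in_besov (n : nat) (w p q : R) (c : list Z -> C) : Prop :=
  ex_series (besov_term n w p q c).

Definition besov_norm (n : nat) (w p q : R) (c : list Z -> C) : R :=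
  rpow (Series (besov_term n w p q c)) (/ q).

Definition cadd (c d : list Z -> C) : list Z -> C := fun xi => Cplus (c xi) (d xi).
Definition csub (c d : list Z -> C) : list Z -> C := fun xi => Cminus (c xi) (d xi).
Definition cscal (l : C) (c : list Z -> C) : list Z -> C := fun xi => Cmult l (c xi).

Definition Tmult (a : list Z -> C) (c : list Z -> C) : list Z -> C :=
  fun xi => Cmult (a xi) (c xi).

Fixpoint psum (phi : nat -> (list Z -> C) -> C) (y : nat -> list Z -> C)
   (c : list Z -> C) (K : nat) : list Z -> C :=
  match K with
  | O => fun _ => 0%C
  | S k => cadd (psum phi y c k) (cscal (phi k c) (y k))
  end.

Definition dual_elem (n : nat) (w p q : R) (phi : (list Z -> C) -> C) (M : R) : Prop :=
  0 <= M /\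
  (forall c d, in_besov n w p q c -> in_besov n w p q d ->
     phi (cadd c d) = Cplus (phi c) (phi d)) /\
  (forall l c, in_besov n w p q c -> phi (cscal l c) = Cmult l (phi c)) /\
  (forall c, in_besov n w p q c -> Cmod (phi c) <= M * besov_norm n w p q c).

(* T = sum_k phi_k(.) y_k with sum_k ||phi_k||^r ||y_k||^r < oo
   (M k bounds ||phi_k||_{E'}), the series converging in B^w_{p,q} *)
Definition nuclear_rep (n : nat) (w p q r : R) (T : (list Z -> C) -> list Z -> C)
  (phi : nat -> (list Z -> C) -> C) (M : nat -> R) (y : nat -> list Z -> C) : Prop :=
  (forall k, dual_elem n w p q (phi k) (M k)) /\
  (forall k, in_besov n w p q (y k)) /\
  ex_series (fun k => rpow (M k * besov_norm n w p q (y k)) r) /\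
  (forall c, in_besov n w p q c ->
     is_lim_seq (fun K => besov_norm n w p q (csub (T c) (psum phi y c K))) 0).

Definition r_nuclear (n : nat) (w p q r : R) (T : (list Z -> C) -> list Z -> C) : Prop :=
  (forall c, in_besov n w p q c -> in_besov n w p q (T c)) /\
  exists phi M y, nuclear_rep n w p q r T phi M y.

(* sum over Z^n, as the limit of the sums over the boxes [-N,N]^n *)
Definition box_sum (n : nat) (a : list Z -> C) (N : nat) : C :=
  fold_right Cplus 0%C (map a (box n N)).

Definition conj_exp (p : R) : R := p / (p - 1).

(* Everything is read off Fourier coefficients.  By orthogonality of the characters on the
   cube and L^1 <= L^p, a trigonometric polynomial controls each of its coefficients by its
   L^p norm, so [c xi] with [xi] in the j-th dyadic shell is a functional of norm at most
   2^(1 - j w) on B^w_{p,q}.  Enumerating Z^n shell by shell, T_a = sum_k a(xi_k) c(xi_k) e_(xi_k).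
   Since |a| <= C 2^(j m) on the j-th shell, which has at most 8^n 2^(j n) points, the r-th
   powers of the norms of these rank-one terms are summable when n + m r < 0, and the partial
   sums converge to T_a when n + m < 0.
   For the trace, evaluating any nuclear representation sum_k phi_k(.) y_k of T_a at e_xi and
   taking the coefficient at xi gives sum_k phi_k(e_xi) y_k(xi) = a(xi).  Splitting each y_k
   into its part on a ball and the rest, dominated convergence (sum_k |phi_k| |y_k| < oo as
   r <= 1) shows that sum_k phi_k(y_k) is the limit of the sums of a over balls, hence over
   boxes. *)

From Stdlib Require Import Reals ZArith List Lra Lia Psatz FunctionalExtensionality Permutation.
From Stdlib Require Import Classical_Prop.
From Coquelicot Require Import Coquelicot.
Import ListNotations.
Open Scope R_scope.

Lemma rpow_ge0 x y : 0 <= rpow x y.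
Proof. unfold rpow; destruct (Rlt_dec 0 x); [left; apply exp_pos | lra]. Qed.

Lemma rpow_le0 x y : x <= 0 -> rpow x y = 0.
Proof. intros; unfold rpow; destruct (Rlt_dec 0 x); [lra | auto]. Qed.

Lemma rpow_pos x y : 0 < x -> rpow x y = Rpower x y.
Proof. intros; unfold rpow; destruct (Rlt_dec 0 x); [auto | lra]. Qed.

Lemma rpow_gt0 x y : 0 < x -> 0 < rpow x y.
Proof. intros; rewrite rpow_pos by auto; apply exp_pos. Qed.

Lemma rpow_le x y s : 0 <= x <= y -> 0 <= s -> rpow x s <= rpow y s.
Proof.
  intros [h1 h2] hs. destruct (Req_dec x 0) as [->|hx].
  - rewrite rpow_le0 by lra; apply rpow_ge0.
  - rewrite !rpow_pos by lra. apply Rle_Rpower_l; lra.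
Qed.

Lemma rpow_lt x y s : 0 <= x < y -> 0 < s -> rpow x s < rpow y s.
Proof.
  intros [h1 h2] hs. destruct (Req_dec x 0) as [->|hx].
  - rewrite rpow_le0 by lra; apply rpow_gt0; lra.
  - rewrite !rpow_pos by lra. apply exp_increasing, Rmult_lt_compat_l; auto.
    apply ln_increasing; lra.
Qed.

Lemma rpow_rpow x a b : 0 <= x -> rpow (rpow x a) b = rpow x (a * b).
Proof.
  intros hx. destruct (Req_dec x 0) as [->|hx'].
  - rewrite (rpow_le0 0 a), !rpow_le0 by lra; reflexivity.
  - rewrite (rpow_pos x a), (rpow_pos x) by lra. rewrite rpow_pos by apply exp_pos.
    apply Rpower_mult.
Qed.

Lemma rpow_1 x : 0 <= x -> rpow x 1 = x.
Proof.
  intros hx. destruct (Req_dec x 0) as [->|hx']; [apply rpow_le0; lra |].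
  rewrite rpow_pos by lra; apply Rpower_1; lra.
Qed.

Lemma rpow_inv x s : 0 <= x -> s <> 0 -> rpow (rpow x s) (/ s) = x.
Proof. intros hx hs. rewrite rpow_rpow, Rinv_r by auto. apply rpow_1; auto. Qed.

Lemma rpow_mult x y s : 0 <= x -> 0 <= y -> rpow (x * y) s = rpow x s * rpow y s.
Proof.
  intros hx hy. destruct (Req_dec x 0) as [->|hx'].
  { rewrite Rmult_0_l, (rpow_le0 0 s) by lra; ring. }
  destruct (Req_dec y 0) as [->|hy'].
  { rewrite Rmult_0_r, (rpow_le0 0 s) by lra; ring. }
  rewrite !rpow_pos by nra. symmetry; apply Rpower_mult_distr; lra.
Qed.

Lemma Rpower_1_l y : Rpower 1 y = 1.
Proof. unfold Rpower. rewrite ln_1, Rmult_0_r; apply exp_0. Qed.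

Lemma rpow_1_l s : rpow 1 s = 1.
Proof. rewrite rpow_pos by lra; apply Rpower_1_l. Qed.

Lemma rpow_plus x a b : 0 < x -> rpow x (a + b) = rpow x a * rpow x b.
Proof. intros; rewrite !rpow_pos by auto; apply Rpower_plus. Qed.

Lemma rpow_opp x s : 0 < x -> rpow (/ x) s = rpow x (- s).
Proof.
  intros hx. rewrite !rpow_pos by (try apply Rinv_0_lt_compat; lra).
  unfold Rpower. rewrite ln_Rinv by lra. f_equal; ring.
Qed.

Lemma rpow_pow x j s : 0 < x -> rpow (x ^ j) s = rpow x s ^ j.
Proof.
  intros hx. induction j; simpl; [apply rpow_1_l |].
  rewrite rpow_mult, IHj; auto; [lra | apply pow_le; lra].
Qed.

Lemma rpow_plus_le x y s : 0 <= x -> 0 <= y -> 0 <= s ->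
  rpow (x + y) s <= rpow 2 s * (rpow x s + rpow y s).
Proof.
  intros hx hy hs. pose proof (Rmax_l x y); pose proof (Rmax_r x y).
  apply Rle_trans with (rpow (2 * Rmax x y) s); [apply rpow_le; lra |].
  rewrite rpow_mult by lra. apply Rmult_le_compat_l; [apply rpow_ge0 |].
  pose proof (rpow_ge0 x s); pose proof (rpow_ge0 y s).
  unfold Rmax; destruct (Rle_dec x y); lra.
Qed.

Lemma bernoulli_rpow u p : 0 <= u -> 1 <= p -> 1 + p * (u - 1) <= rpow u p.
Proof.
  intros hu hp. destruct (Req_dec u 0) as [->|hu0]; [rewrite rpow_le0; lra |].
  rewrite rpow_pos by lra.
  set (f := fun v => Rpower v p - p * v).
  assert (Df : forall c, 0 < c -> derivable_pt_lim f c (p * Rpower c (p - 1) - p)).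
  { intros c hc. unfold f.
    replace (p * Rpower c (p - 1) - p) with (p * Rpower c (p - 1) - p * 1) by ring.
    apply derivable_pt_lim_minus; [apply derivable_pt_lim_power; auto |].
    apply derivable_pt_lim_scal, derivable_pt_lim_id. }
  assert (f1 : f 1 = 1 - p) by (unfold f; rewrite Rpower_1_l; ring).
  destruct (Rtotal_order u 1) as [hlt|[->|hgt]].
  - destruct (MVT_cor2 f (fun c => p * Rpower c (p - 1) - p) u 1 hlt) as [c [Hc Hc2]]; [intros c hc; apply Df; lra |].
    assert (Rpower c (p - 1) <= Rpower 1 (p - 1)) by (apply Rle_Rpower_l; lra).
    rewrite Rpower_1_l in H.
    assert (0 <= p * ((1 - Rpower c (p - 1)) * (1 - u))) by (apply Rmult_le_pos; nra).
    unfold f in Hc; rewrite Rpower_1_l in Hc; nra.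
  - rewrite Rpower_1_l; lra.
  - destruct (MVT_cor2 f (fun c => p * Rpower c (p - 1) - p) 1 u hgt) as [c [Hc Hc2]]; [intros c hc; apply Df; lra |].
    assert (Rpower c 0 <= Rpower c (p - 1)) by (apply Rle_Rpower; lra).
    rewrite Rpower_O in H by lra.
    assert (0 <= p * ((Rpower c (p - 1) - 1) * (u - 1))) by (apply Rmult_le_pos; nra).
    unfold f in Hc; rewrite Rpower_1_l in Hc; nra.
Qed.

Lemma young_rpow x A p : 0 <= x -> 0 < A -> 1 <= p ->
  x <= A * (1 - / p) + / p * rpow A (1 - p) * rpow x p.
Proof.
  intros hx hA hp.
  pose proof (bernoulli_rpow (x / A) p ltac:(apply Rdiv_le_0_compat; lra) hp) as B.
  unfold Rdiv in B. rewrite rpow_mult, rpow_opp in B by (try apply Rlt_le, Rinv_0_lt_compat; lra).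
  replace (1 - p) with (1 + - p) by ring. rewrite rpow_plus, rpow_1 by lra.
  pose proof (rpow_ge0 x p); pose proof (rpow_ge0 A (- p)).
  apply Rmult_le_compat_l with (r := A * / p) in B;
    [| apply Rmult_le_pos; [lra | apply Rlt_le, Rinv_0_lt_compat; lra]].
  replace (A * / p * (1 + p * (x * / A - 1))) with (A * / p + x - A) in B by (field; lra).
  nra.
Qed.

Lemma rpow_lipschitz p B : 1 <= p -> 0 <= B -> forall u v, 0 <= u <= B -> 0 <= v <= B ->
  Rabs (rpow u p - rpow v p) <= p * rpow (B + 1) (p - 1) * Rabs (u - v).
Proof.
  intros hp hB. pose proof (rpow_ge0 (B + 1) (p - 1)) as hK0.
  assert (K : forall c, 0 < c <= B -> Rpower c (p - 1) <= rpow (B + 1) (p - 1)).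
  { intros c hc. rewrite rpow_pos by lra. apply Rle_Rpower_l; lra. }
  assert (W : forall u v, 0 < v < u -> u <= B ->
     Rabs (rpow u p - rpow v p) <= p * rpow (B + 1) (p - 1) * Rabs (u - v)).
  { intros u v hv huB. rewrite (rpow_pos u), (rpow_pos v) by lra.
    destruct (MVT_cor2 (fun x => Rpower x p) (fun c => p * Rpower c (p - 1)) v u ltac:(lra))
      as [c [-> Hc]]; [intros c hc; apply derivable_pt_lim_power; lra |].
    specialize (K c ltac:(lra)). pose proof (exp_pos ((p - 1) * ln c)).
    rewrite (Rabs_right (u - v)) by lra.
    rewrite Rabs_right by (apply Rle_ge, Rmult_le_pos; [apply Rmult_le_pos |]; unfold Rpower; lra).
    apply Rmult_le_compat_r; [lra | apply Rmult_le_compat_l; lra]. }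
  assert (W0 : forall u, 0 <= u <= B -> rpow u p <= p * rpow (B + 1) (p - 1) * u).
  { intros u hu. destruct (Req_dec u 0) as [->|hu0]; [rewrite (rpow_le0 0); lra |].
    rewrite (rpow_pos u) by lra. replace p with (1 + (p - 1)) at 1 by ring.
    rewrite Rpower_plus, Rpower_1 by lra. specialize (K u ltac:(lra)).
    assert (0 <= u * (rpow (B + 1) (p - 1) - Rpower u (p - 1))) by (apply Rmult_le_pos; lra).
    assert (0 <= (p - 1) * (rpow (B + 1) (p - 1) * u)) by (apply Rmult_le_pos; nra).
    nra. }
  intros u v hu hv.
  destruct (Rtotal_order u v) as [h|[<-|h]].
  - rewrite Rabs_minus_sym, (Rabs_minus_sym u).
    destruct (Req_dec u 0) as [->|hu0]; [| apply W; lra].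
    rewrite (rpow_le0 0 p), !Rminus_0_r, (Rabs_right v), Rabs_right
      by (try apply Rle_ge, rpow_ge0; lra).
    apply W0; lra.
  - unfold Rminus; rewrite !Rplus_opp_r, Rabs_R0; lra.
  - destruct (Req_dec v 0) as [->|hv0]; [| apply W; lra].
    rewrite (rpow_le0 0 p), !Rminus_0_r, (Rabs_right u), Rabs_right
      by (try apply Rle_ge, rpow_ge0; lra).
    apply W0; lra.
Qed.

(** * Iterated integrals of Lipschitz functions over the unit cube *)

Fixpoint ldist (x y : list R) : R :=
  match x, y with
  | a :: x', b :: y' => Rabs (a - b) + ldist x' y'
  | _, _ => 0
  end.

Lemma ldist_ge0 x y : 0 <= ldist x y.
Proof.
  revert y; induction x as [|a x IH]; intros [|b y]; simpl; try lra.
  pose proof (IH y); pose proof (Rabs_pos (a - b)); lra.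
Qed.

Lemma ldist_refl x : ldist x x = 0.
Proof. induction x; simpl; auto. rewrite IHx, Rminus_diag, Rabs_R0; ring. Qed.

Definition lipschitz_with (k : nat) (L : R) (F : list R -> R) : Prop :=
  0 <= L /\ forall x y, length x = k -> length y = k -> Rabs (F x - F y) <= L * ldist x y.

Definition lipschitz (k : nat) (F : list R -> R) : Prop := exists L, lipschitz_with k L F.

Lemma lipschitz_const k c : lipschitz k (fun _ => c).
Proof.
  exists 0; split; [lra |]. intros x y _ _.
  rewrite Rminus_diag, Rabs_R0; pose proof (ldist_ge0 x y); nra.
Qed.

Lemma lipschitz_plus k F G : lipschitz k F -> lipschitz k G -> lipschitz k (fun x => F x + G x).
Proof.
  intros [L1 [h1 H1]] [L2 [h2 H2]]; exists (L1 + L2); split; [lra |]. intros x y hx hy.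
  specialize (H1 x y hx hy); specialize (H2 x y hx hy); pose proof (ldist_ge0 x y).
  replace (F x + G x - (F y + G y)) with ((F x - F y) + (G x - G y)) by ring.
  eapply Rle_trans; [apply Rabs_triang | nra].
Qed.

Lemma lipschitz_comp_on k (P : R -> Prop) F phi K : lipschitz k F -> 0 <= K ->
  (forall x, length x = k -> P (F x)) ->
  (forall a b, P a -> P b -> Rabs (phi a - phi b) <= K * Rabs (a - b)) ->
  lipschitz k (fun x => phi (F x)).
Proof.
  intros [L [hL H]] hK HP Hphi. exists (K * L); split; [nra |]. intros x y hx hy.
  eapply Rle_trans; [apply Hphi; auto |]. rewrite Rmult_assoc.
  apply Rmult_le_compat_l; auto.
Qed.

Lemma lipschitz_scal k F c : lipschitz k F -> lipschitz k (fun x => c * F x).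
Proof.
  intros HF. apply (lipschitz_comp_on k (fun _ => True) F (Rmult c) (Rabs c)); auto.
  - apply Rabs_pos.
  - intros a b _ _. rewrite <- Rmult_minus_distr_l, Rabs_mult; lra.
Qed.

Lemma lipschitz_minus k F G : lipschitz k F -> lipschitz k G -> lipschitz k (fun x => F x - G x).
Proof.
  intros HF HG. destruct (lipschitz_plus k F _ HF (lipschitz_scal k G (-1) HG)) as [L [h H]].
  exists L; split; auto. intros x y hx hy.
  replace (F x - G x - (F y - G y)) with (F x + -1 * G x - (F y + -1 * G y)) by ring. auto.
Qed.

Lemma lipschitz_with_slice k L F t :
  lipschitz_with (S k) L F -> lipschitz_with k L (fun y => F (t :: y)).
Proof.
  intros [h H]; split; auto. intros x y hx hy.
  specialize (H (t :: x) (t :: y)); simpl in H. rewrite hx, hy, Rminus_diag, Rabs_R0, Rplus_0_l in H.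
  auto.
Qed.

Lemma lipschitz_slice k F t : lipschitz (S k) F -> lipschitz k (fun y => F (t :: y)).
Proof. intros [L HL]; exists L; apply lipschitz_with_slice; auto. Qed.

Lemma intT_ext k F G : (forall x, length x = k -> F x = G x) -> intT k F = intT k G.
Proof.
  revert F G; induction k; intros F G H; simpl; [apply H; reflexivity |].
  apply RInt_ext; intros t _. apply IHk; intros y hy. apply H; simpl; auto.
Qed.

Lemma RInt01_const (c : R) : RInt (fun _ => c) 0 1 = c.
Proof. rewrite RInt_const. unfold scal; simpl; unfold mult; simpl; ring. Qed.

Lemma intT_const k c : intT k (fun _ => c) = c.
Proof. induction k; simpl; auto. rewrite (RInt_ext _ (fun _ => c)); [apply RInt01_const | auto]. Qed.

Definition intT_linear_monotone (k : nat) : Prop :=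
  (forall F G, lipschitz k F -> lipschitz k G ->
     intT k (fun x => F x + G x) = intT k F + intT k G) /\
  (forall F c, lipschitz k F -> intT k (fun x => c * F x) = c * intT k F) /\
  (forall F G, lipschitz k F -> lipschitz k G ->
     (forall x, length x = k -> F x <= G x) -> intT k F <= intT k G).

Lemma intT_slice_lipschitz k F L : intT_linear_monotone k -> lipschitz_with (S k) L F ->
  forall t s, Rabs (intT k (fun y => F (t :: y)) - intT k (fun y => F (s :: y))) <= L * Rabs (t - s).
Proof.
  intros [Hplus [Hscal Hle]] HF t s.
  assert (Ht : lipschitz k (fun y => F (t :: y))) by (exists L; apply lipschitz_with_slice; auto).
  assert (Hs : lipschitz k (fun y => -1 * F (s :: y)))
    by (apply lipschitz_scal; exists L; apply lipschitz_with_slice; auto).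
  assert (HD : lipschitz k (fun y => F (t :: y) + -1 * F (s :: y))) by (apply lipschitz_plus; auto).
  replace (intT k (fun y => F (t :: y)) - intT k (fun y => F (s :: y)))
    with (intT k (fun y => F (t :: y) + -1 * F (s :: y))).
  2: { rewrite Hplus, Hscal by (auto; exists L; apply lipschitz_with_slice; auto). ring. }
  destruct HF as [hL HF].
  assert (B : forall y, length y = k -> Rabs (F (t :: y) + -1 * F (s :: y)) <= L * Rabs (t - s)).
  { intros y hy. specialize (HF (t :: y) (s :: y)); simpl in HF.
    rewrite hy, ldist_refl, Rplus_0_r in HF. replace (F (t :: y) + -1 * F (s :: y))
      with (F (t :: y) - F (s :: y)) by ring. auto. }
  apply Rabs_le; split.
  - rewrite <- (intT_const k (- (L * Rabs (t - s)))).
    apply Hle; [apply lipschitz_const | auto |]. intros y hy.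
    specialize (B y hy); apply Rabs_le_between in B; lra.
  - rewrite <- (intT_const k (L * Rabs (t - s))).
    apply Hle; [auto | apply lipschitz_const |]. intros y hy.
    specialize (B y hy); apply Rabs_le_between in B; lra.
Qed.

Lemma lipschitz_R_continuous (f : R -> R) L :
  0 <= L -> (forall t s, Rabs (f t - f s) <= L * Rabs (t - s)) -> forall z, continuous f z.
Proof.
  intros hL H z. apply continuity_pt_filterlim. intros eps He.
  exists (eps / (L + 1)); split; [apply Rdiv_lt_0_compat; lra |].
  intros x [_ Hx]; simpl in *; unfold R_dist in *.
  eapply Rle_lt_trans; [apply H |].
  apply Rle_lt_trans with ((L + 1) * Rabs (x - z)); [pose proof (Rabs_pos (x - z)); nra |].
  replace eps with ((L + 1) * (eps / (L + 1))) by (field; lra).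
  apply Rmult_lt_compat_l; lra.
Qed.

Lemma ex_RInt_intT_slice k F : intT_linear_monotone k -> lipschitz (S k) F ->
  ex_RInt (fun t => intT k (fun y => F (t :: y))) 0 1.
Proof.
  intros HP [L HF]. apply (@ex_RInt_continuous R_CompleteNormedModule). intros z _.
  apply (lipschitz_R_continuous _ L); [apply HF | apply intT_slice_lipschitz; auto].
Qed.

(* Linearity and monotonicity are proved together: a slice integral is Riemann integrable
   because it is Lipschitz, which needs both properties one dimension lower. *)
Lemma intT_linear_monotone_all k : intT_linear_monotone k.
Proof.
  induction k as [|k IH]; [split; [|split]; simpl; intros; auto |].
  pose proof IH as [Hplus [Hscal Hle]].
  split; [|split].
  - intros F G HF HG; simpl.
    rewrite (RInt_ext _ (fun t => plus (intT k (fun y => F (t :: y))) (intT k (fun y => G (t :: y))))).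
    + apply (@RInt_plus R_CompleteNormedModule); apply ex_RInt_intT_slice; auto.
    + intros t _. apply Hplus; apply lipschitz_slice; auto.
  - intros F c HF; simpl.
    rewrite (RInt_ext _ (fun t => scal c (intT k (fun y => F (t :: y))))).
    + apply (@RInt_scal R_CompleteNormedModule); apply ex_RInt_intT_slice; auto.
    + intros t _. apply Hscal, lipschitz_slice; auto.
  - intros F G HF HG HFG; simpl.
    apply RInt_le; [lra | apply ex_RInt_intT_slice; auto | apply ex_RInt_intT_slice; auto |].
    intros t _. apply Hle; try apply lipschitz_slice; auto.
    intros y hy; apply HFG; simpl; auto.
Qed.

Lemma intT_plus k F G : lipschitz k F -> lipschitz k G ->
  intT k (fun x => F x + G x) = intT k F + intT k G.
Proof. apply intT_linear_monotone_all. Qed.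

Lemma intT_scal k F c : lipschitz k F -> intT k (fun x => c * F x) = c * intT k F.
Proof. apply intT_linear_monotone_all. Qed.

Lemma intT_le k F G : lipschitz k F -> lipschitz k G ->
  (forall x, length x = k -> F x <= G x) -> intT k F <= intT k G.
Proof. apply intT_linear_monotone_all. Qed.

Lemma intT_minus k F G : lipschitz k F -> lipschitz k G ->
  intT k (fun x => F x - G x) = intT k F - intT k G.
Proof.
  intros HF HG. rewrite (intT_ext k _ (fun x => F x + -1 * G x)) by (intros; ring).
  rewrite intT_plus, intT_scal by (try apply lipschitz_scal; auto). ring.
Qed.

Lemma intT_ge0 k F : lipschitz k F -> (forall x, length x = k -> 0 <= F x) -> 0 <= intT k F.
Proof. intros HF H. rewrite <- (intT_const k 0). apply intT_le; auto. apply lipschitz_const. Qed.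

Lemma intT_ub k F B : lipschitz k F -> (forall x, length x = k -> F x <= B) -> intT k F <= B.
Proof. intros HF H. rewrite <- (intT_const k B). apply intT_le; auto. apply lipschitz_const. Qed.

Lemma intT_abs_le k F G : lipschitz k F -> lipschitz k G ->
  (forall x, length x = k -> Rabs (F x) <= G x) -> Rabs (intT k F) <= intT k G.
Proof.
  intros HF HG H. apply Rabs_le; split.
  - rewrite <- (Rmult_1_l (intT k F)). replace (- intT k G) with (-1 * intT k G) by ring.
    rewrite <- !intT_scal by auto. apply intT_le; try apply lipschitz_scal; auto.
    intros x hx; specialize (H x hx); apply Rabs_le_between in H; lra.
  - apply intT_le; auto. intros x hx; specialize (H x hx); apply Rabs_le_between in H; lra.
Qed.

Definition rsum {A} (l : list A) (f : A -> R) : R := fold_right Rplus 0 (map f l).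
Definition csum {A} (l : list A) (f : A -> C) : C := fold_right Cplus 0%C (map f l).

Lemma rsum_app {A} (l1 l2 : list A) f : rsum (l1 ++ l2) f = rsum l1 f + rsum l2 f.
Proof. unfold rsum; induction l1; simpl; [ring |]. rewrite IHl1; ring. Qed.

Lemma rsum_ge0 {A} (l : list A) f : (forall x, 0 <= f x) -> 0 <= rsum l f.
Proof. unfold rsum; intros H; induction l; simpl; [lra |]. specialize (H a); lra. Qed.

Lemma rsum_le {A} (l : list A) f g : (forall x, In x l -> f x <= g x) -> rsum l f <= rsum l g.
Proof.
  unfold rsum; induction l; intros H; simpl; [lra |].
  pose proof (H a (or_introl eq_refl)); pose proof (IHl (fun x h => H x (or_intror h))); lra.
Qed.

Lemma rsum_le_const {A} (l : list A) g B :
  (forall x, In x l -> g x <= B) -> rsum l g <= INR (length l) * B.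
Proof.
  unfold rsum; induction l as [|x l IH]; intros H; simpl length; simpl fold_right; [simpl; lra |].
  rewrite S_INR. specialize (IH (fun y h => H y (or_intror h))). specialize (H x (or_introl eq_refl)).
  lra.
Qed.

Lemma rsum_incl {A} (l1 l2 : list A) g : NoDup l1 -> incl l1 l2 -> (forall x, 0 <= g x) ->
  rsum l1 g <= rsum l2 g.
Proof.
  revert l2; induction l1 as [|x l1 IH]; intros l2 hN hI hg; [apply rsum_ge0; auto |].
  inversion hN; subst. destruct (in_split x l2 (hI x (or_introl eq_refl))) as [u [v ->]].
  assert (IH' : rsum l1 g <= rsum (u ++ v) g).
  { apply IH; auto. intros y hy. assert (hy2 : In y (u ++ x :: v)) by (apply hI; simpl; auto).
    apply in_app_iff in hy2; apply in_app_iff. destruct hy2 as [h|[<-|h]]; tauto. }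
  rewrite rsum_app in *. unfold rsum in *; simpl. lra.
Qed.

Lemma Cmod_csum {A} (l : list A) f : Cmod (csum l f) <= rsum l (fun x => Cmod (f x)).
Proof.
  unfold csum, rsum; induction l; simpl; [rewrite Cmod_0; lra |].
  eapply Rle_trans; [apply Cmod_triangle | lra].
Qed.

Lemma csum_cons {A} (x : A) l f : csum (x :: l) f = (f x + csum l f)%C.
Proof. reflexivity. Qed.

Lemma csum_zero {A} (l : list A) (f : A -> C) : (forall x, In x l -> f x = 0%C) -> csum l f = 0%C.
Proof.
  induction l as [|x l IH]; intros H; [reflexivity |].
  rewrite csum_cons, H, IH; [ring | intros; apply H | ]; simpl; auto.
Qed.

Lemma csum_delta (L : list (list Z)) (v : list Z -> C) xi : NoDup L -> In xi L ->
  csum L (fun eta => v eta * if list_eq_dec Z.eq_dec eta xi then 1 else 0)%C = v xi.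
Proof.
  induction L as [|x L IH]; intros hN hI; [destruct hI |]. inversion hN; subst.
  rewrite csum_cons. destruct (list_eq_dec Z.eq_dec x xi) as [->|ne].
  - rewrite csum_zero; [ring |]. intros eta he.
    destruct (list_eq_dec Z.eq_dec eta xi) as [->|]; [contradiction | ring].
  - destruct hI as [->|hI]; [congruence |]. rewrite IH by auto. ring.
Qed.

(** * Complex integrals, characters and trigonometric polynomials *)

Lemma Re_le_Cmod u : Rabs (fst u) <= Cmod u.
Proof. unfold Cmod. rewrite <- sqrt_Rsqr_abs. apply sqrt_le_1_alt. unfold Rsqr; nra. Qed.

Lemma Im_le_Cmod u : Rabs (snd u) <= Cmod u.
Proof. unfold Cmod. rewrite <- sqrt_Rsqr_abs. apply sqrt_le_1_alt. unfold Rsqr; nra. Qed.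

Lemma Cmod_le_Re_Im u : Cmod u <= Rabs (fst u) + Rabs (snd u).
Proof.
  unfold Cmod. pose proof (Rabs_pos (fst u)); pose proof (Rabs_pos (snd u)).
  rewrite <- (sqrt_Rsqr (Rabs (fst u) + Rabs (snd u))) by lra.
  apply sqrt_le_1_alt. unfold Rsqr. destruct u as [a b]; simpl.
  unfold Rabs; destruct (Rcase_abs a), (Rcase_abs b); nra.
Qed.

Lemma Cmod_sub_sym u v : Cmod (u - v)%C = Cmod (v - u)%C.
Proof. replace (u - v)%C with (- (v - u))%C by ring. apply Cmod_opp. Qed.

Lemma Cmod_dist_le u v : Rabs (Cmod u - Cmod v) <= Cmod (u - v)%C.
Proof.
  pose proof (Cmod_triangle v (u - v)%C); pose proof (Cmod_triangle u (v - u)%C).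
  replace (v + (u - v))%C with u in * by ring. replace (u + (v - u))%C with v in * by ring.
  rewrite Cmod_sub_sym in H0. apply Rabs_le; lra.
Qed.

Definition intC (k : nat) (g : list R -> C) : C :=
  (intT k (fun x => fst (g x)), intT k (fun x => snd (g x))).

Definition lipschitzC (k : nat) (g : list R -> C) : Prop :=
  lipschitz k (fun x => fst (g x)) /\ lipschitz k (fun x => snd (g x)).

Lemma lipschitzC_const k c : lipschitzC k (fun _ => c).
Proof. split; apply lipschitz_const. Qed.

Lemma lipschitzC_plus k g h : lipschitzC k g -> lipschitzC k h -> lipschitzC k (fun x => g x + h x)%C.
Proof. intros [] []; split; apply lipschitz_plus; auto. Qed.

Lemma lipschitzC_scal k g c : lipschitzC k g -> lipschitzC k (fun x => c * g x)%C.
Proof. intros []; split; simpl; [apply lipschitz_minus | apply lipschitz_plus]; apply lipschitz_scal; auto. Qed.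

Lemma lipschitzC_csum {A} k (g : A -> list R -> C) l :
  (forall a, In a l -> lipschitzC k (g a)) -> lipschitzC k (fun x => csum l (fun a => g a x)).
Proof.
  unfold csum; induction l as [|a l IH]; intros H; simpl; [apply lipschitzC_const |].
  apply lipschitzC_plus; [apply H; simpl | apply IH; intros; apply H; simpl]; auto.
Qed.

Lemma lipschitz_Cmod k g : lipschitzC k g -> lipschitz k (fun x => Cmod (g x)).
Proof.
  intros [[L1 [h1 H1]] [L2 [h2 H2]]]. exists (L1 + L2); split; [lra |]. intros x y hx hy.
  eapply Rle_trans; [apply Cmod_dist_le |]. eapply Rle_trans; [apply Cmod_le_Re_Im |].
  specialize (H1 x y hx hy); specialize (H2 x y hx hy); simpl. unfold Rminus in *; nra.
Qed.

Lemma intC_ext k g h : (forall x, length x = k -> g x = h x) -> intC k g = intC k h.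
Proof. intros H; unfold intC; f_equal; apply intT_ext; intros x hx; rewrite H; auto. Qed.

Lemma intC_plus k g h : lipschitzC k g -> lipschitzC k h ->
  intC k (fun x => g x + h x)%C = (intC k g + intC k h)%C.
Proof. intros [] []; unfold intC; simpl; rewrite !intT_plus; auto. Qed.

Lemma intC_scal k g c : lipschitzC k g -> intC k (fun x => c * g x)%C = (c * intC k g)%C.
Proof.
  intros [Hr Hi]; unfold intC; simpl.
  rewrite intT_minus, intT_plus, !intT_scal by (try apply lipschitz_scal; auto). reflexivity.
Qed.

Lemma intC_csum {A} k (g : A -> list R -> C) l : (forall a, In a l -> lipschitzC k (g a)) ->
  intC k (fun x => csum l (fun a => g a x)) = csum l (fun a => intC k (g a)).
Proof.
  induction l as [|a l IH]; intros H.
  - unfold intC, csum; simpl; rewrite intT_const; reflexivity.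
  - rewrite (intC_ext k _ (fun x => g a x + csum l (fun b => g b x))%C) by reflexivity.
    rewrite intC_plus, IH; [reflexivity | intros; apply H; simpl; auto .. |].
    apply lipschitzC_csum; intros; apply H; simpl; auto.
Qed.

Lemma Cmod_intC_le k g : lipschitzC k g -> Cmod (intC k g) <= 2 * intT k (fun x => Cmod (g x)).
Proof.
  intros [Hr Hi]. eapply Rle_trans; [apply Cmod_le_Re_Im |]. simpl.
  assert (HC : lipschitz k (fun x => Cmod (g x))) by (apply lipschitz_Cmod; split; auto).
  pose proof (intT_abs_le k _ _ Hr HC (fun x _ => Re_le_Cmod (g x))).
  pose proof (intT_abs_le k _ _ Hi HC (fun x _ => Im_le_Cmod (g x))). lra.
Qed.

Lemma cexp2pi_plus a b : cexp2pi (a + b) = (cexp2pi a * cexp2pi b)%C.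
Proof.
  unfold cexp2pi. replace (2 * PI * (a + b)) with (2 * PI * a + 2 * PI * b) by ring.
  rewrite cos_plus, sin_plus. unfold Cmult; simpl; f_equal; ring.
Qed.

Lemma cexp2pi_minus a b : cexp2pi (a - b) = (cexp2pi a * Cconj (cexp2pi b))%C.
Proof.
  unfold cexp2pi. replace (2 * PI * (a - b)) with (2 * PI * a - 2 * PI * b) by ring.
  rewrite cos_minus, sin_minus. unfold Cmult, Cconj; simpl; f_equal; ring.
Qed.

Lemma Cmod_cexp2pi t : Cmod (cexp2pi t) = 1.
Proof.
  unfold Cmod, cexp2pi; simpl. pose proof (sin2_cos2 (2 * PI * t)) as H; unfold Rsqr in H.
  transitivity (sqrt 1); [f_equal; nra | apply sqrt_1].
Qed.

Fixpoint zabs (l : list Z) : R :=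
  match l with [] => 0 | z :: l' => Rabs (IZR z) + zabs l' end.

Lemma zabs_ge0 l : 0 <= zabs l.
Proof. induction l; simpl; [lra |]. pose proof (Rabs_pos (IZR a)); lra. Qed.

Lemma Rabs_dotRZ_sub eta x y : length x = length y ->
  Rabs (dotRZ x eta - dotRZ y eta) <= zabs eta * ldist x y.
Proof.
  revert x y; induction eta as [|z eta IH]; intros x y hl.
  - destruct x, y; simpl; rewrite Rminus_diag, Rabs_R0; lra.
  - pose proof (zabs_ge0 eta); pose proof (Rabs_pos (IZR z)).
    destruct x as [|a x], y as [|b y]; simpl in *; try discriminate.
    + rewrite Rminus_diag, Rabs_R0; lra.
    + replace (a * IZR z + dotRZ x eta - (b * IZR z + dotRZ y eta))
        with ((a - b) * IZR z + (dotRZ x eta - dotRZ y eta)) by ring.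
      eapply Rle_trans; [apply Rabs_triang |]. rewrite Rabs_mult.
      specialize (IH x y ltac:(lia)). pose proof (Rabs_pos (a - b)); pose proof (ldist_ge0 x y).
      nra.
Qed.

Lemma lipschitz_dotRZ k eta : lipschitz k (fun x => dotRZ x eta).
Proof.
  exists (zabs eta); split; [apply zabs_ge0 |]. intros x y hx hy.
  apply Rabs_dotRZ_sub; congruence.
Qed.

Lemma Rabs_cos_sub a b : Rabs (cos a - cos b) <= Rabs (a - b).
Proof.
  destruct (MVT_abs cos (fun c => - sin c) b a) as [c [-> _]]; [intros; apply derivable_pt_lim_cos |].
  rewrite Rabs_Ropp. pose proof (SIN_bound c); pose proof (Rabs_pos (a - b)).
  rewrite <- (Rmult_1_l (Rabs (a - b))) at 2. apply Rmult_le_compat_r; [lra | apply Rabs_le; lra].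
Qed.

Lemma Rabs_sin_sub a b : Rabs (sin a - sin b) <= Rabs (a - b).
Proof.
  destruct (MVT_abs sin cos b a) as [c [-> _]]; [intros; apply derivable_pt_lim_sin |].
  pose proof (COS_bound c); pose proof (Rabs_pos (a - b)).
  rewrite <- (Rmult_1_l (Rabs (a - b))) at 2. apply Rmult_le_compat_r; [lra | apply Rabs_le; lra].
Qed.

Lemma lipschitzC_cexp2pi k F : lipschitz k F -> lipschitzC k (fun x => cexp2pi (F x)).
Proof.
  intros HF. pose proof PI_RGT_0.
  assert (Hlin : forall a b, Rabs (2 * PI * a - 2 * PI * b) = 2 * PI * Rabs (a - b)).
  { intros a b. rewrite <- Rmult_minus_distr_l, Rabs_mult, Rabs_right; lra. }
  split; simpl.
  - apply (lipschitz_comp_on k (fun _ => True) F (fun a => cos (2 * PI * a)) (2 * PI)); auto; [lra |].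
    intros a b _ _; rewrite <- Hlin; apply Rabs_cos_sub.
  - apply (lipschitz_comp_on k (fun _ => True) F (fun a => sin (2 * PI * a)) (2 * PI)); auto; [lra |].
    intros a b _ _; rewrite <- Hlin; apply Rabs_sin_sub.
Qed.

Lemma RInt_cos_sin_2pi z :
  RInt (fun t => cos (2 * PI * (t * IZR z))) 0 1 = (if Z.eq_dec z 0 then 1 else 0) /\
  RInt (fun t => sin (2 * PI * (t * IZR z))) 0 1 = 0.
Proof.
  destruct (Z.eq_dec z 0) as [->|hz].
  - rewrite (RInt_ext _ (fun _ => 1)), (RInt_ext (fun t => sin _) (fun _ => 0)), !RInt01_const;
      [auto | intros; rewrite Rmult_0_r, Rmult_0_r; auto using sin_0, cos_0 ..].
  - assert (hz' : IZR z <> 0) by (apply not_0_IZR; auto). pose proof PI_RGT_0.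
    assert (Hc : cos (2 * PI * IZR z) = 1).
    { replace (2 * PI * IZR z) with (2 * (PI * IZR z)) by ring.
      rewrite cos_2a_sin, sin_eq_0_1; [ring | exists z; ring]. }
    assert (Hs : sin (2 * PI * IZR z) = 0) by (apply sin_eq_0_1; exists (2 * z)%Z; rewrite mult_IZR; simpl; ring).
    split.
    + set (f := fun t => sin (2 * PI * (t * IZR z)) / (2 * PI * IZR z)).
      assert (HI : is_RInt (fun t => cos (2 * PI * (t * IZR z))) 0 1 (minus (f 1) (f 0))).
      { apply (@is_RInt_derive R_CompleteNormedModule); intros x _;
          [unfold f; auto_derive; auto; field; repeat split; auto; lra
          | apply (@ex_derive_continuous R_AbsRing R_NormedModule); auto_derive; auto]. }
      rewrite (@is_RInt_unique R_CompleteNormedModule _ _ _ _ HI).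
      unfold f, minus, plus, opp; simpl. rewrite Rmult_1_l, Rmult_0_l, Rmult_0_r, sin_0, Hs.
      field; repeat split; auto; lra.
    + set (f := fun t => - cos (2 * PI * (t * IZR z)) / (2 * PI * IZR z)).
      assert (HI : is_RInt (fun t => sin (2 * PI * (t * IZR z))) 0 1 (minus (f 1) (f 0))).
      { apply (@is_RInt_derive R_CompleteNormedModule); intros x _;
          [unfold f; auto_derive; auto; field; repeat split; auto; lra
          | apply (@ex_derive_continuous R_AbsRing R_NormedModule); auto_derive; auto]. }
      rewrite (@is_RInt_unique R_CompleteNormedModule _ _ _ _ HI).
      unfold f, minus, plus, opp; simpl. rewrite Rmult_1_l, Rmult_0_l, Rmult_0_r, cos_0, Hc.
      field; repeat split; auto; lra.
Qed.

Lemma intC_cons k g : intC (S k) g =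
  (RInt (fun t => fst (intC k (fun y => g (t :: y)))) 0 1,
   RInt (fun t => snd (intC k (fun y => g (t :: y)))) 0 1).
Proof. reflexivity. Qed.

Lemma lipschitzC_character k eta xi : lipschitzC k (fun x => cexp2pi (dotRZ x eta - dotRZ x xi)).
Proof.
  apply (lipschitzC_cexp2pi k (fun x => dotRZ x eta - dotRZ x xi)).
  apply lipschitz_minus; apply lipschitz_dotRZ.
Qed.

Lemma intC_character k eta xi : length eta = k -> length xi = k ->
  intC k (fun x => cexp2pi (dotRZ x eta - dotRZ x xi)) =
  (if list_eq_dec Z.eq_dec eta xi then 1 else 0)%C.
Proof.
  revert eta xi; induction k as [|k IH]; intros eta xi he hx.
  - destruct eta, xi; try discriminate. unfold intC, cexp2pi; simpl.
    rewrite Rminus_0_r, Rmult_0_r, cos_0, sin_0; reflexivity.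
  - destruct eta as [|a eta], xi as [|b xi]; try discriminate.
    injection he as he; injection hx as hx. set (z := (a - b)%Z).
    set (d := intC k (fun y => cexp2pi (dotRZ y eta - dotRZ y xi))).
    replace (intC (S k) _) with ((RInt (fun t => fst (cexp2pi (t * IZR z) * d)%C) 0 1,
                                 RInt (fun t => snd (cexp2pi (t * IZR z) * d)%C) 0 1)).
    2: { rewrite intC_cons; f_equal; apply RInt_ext; intros t _; f_equal; unfold d;
         rewrite <- intC_scal by apply lipschitzC_character;
         apply intC_ext; intros y _; rewrite <- cexp2pi_plus; f_equal;
         unfold z; simpl; rewrite minus_IZR; ring. }
    unfold d; rewrite IH by auto. destruct (RInt_cos_sin_2pi z) as [Hc Hs].
    destruct (list_eq_dec Z.eq_dec eta xi) as [<-|ne].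
    + rewrite (RInt_ext (fun t => fst (cexp2pi (t * IZR z) * 1)%C) (fun t => cos (2 * PI * (t * IZR z)))),
        (RInt_ext (fun t => snd (cexp2pi (t * IZR z) * 1)%C) (fun t => sin (2 * PI * (t * IZR z))))
        by (intros; simpl; ring). rewrite Hc, Hs.
      destruct (Z.eq_dec z 0) as [ez|nz], (list_eq_dec Z.eq_dec (a :: eta) (b :: eta)) as [e|ne];
        try reflexivity; [exfalso; apply ne; f_equal; unfold z in ez; lia |].
      injection e; unfold z in nz; lia.
    + rewrite (RInt_ext (fun t => fst (cexp2pi (t * IZR z) * 0)%C) (fun _ => 0)),
        (RInt_ext (fun t => snd (cexp2pi (t * IZR z) * 0)%C) (fun _ => 0)), RInt01_const
        by (intros; simpl; ring).
      destruct (list_eq_dec Z.eq_dec (a :: eta) (b :: xi)) as [e|]; [injection e; congruence | auto].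
Qed.

Definition trig_poly (L : list (list Z)) (c : list Z -> C) (x : list R) : C :=
  csum L (fun xi => cexp2pi (dotRZ x xi) * c xi)%C.

Definition coef_l1 (L : list (list Z)) (c : list Z -> C) : R := rsum L (fun xi => Cmod (c xi)).

Lemma coef_l1_ge0 L c : 0 <= coef_l1 L c.
Proof. apply rsum_ge0; intros; apply Cmod_ge_0. Qed.

Lemma lipschitzC_trig_poly k L c : lipschitzC k (trig_poly L c).
Proof.
  apply lipschitzC_csum; intros xi _.
  rewrite (functional_extensionality (fun x => cexp2pi (dotRZ x xi) * c xi)%C
                                     (fun x => c xi * cexp2pi (dotRZ x xi))%C) by (intros; ring).
  apply lipschitzC_scal, lipschitzC_cexp2pi, lipschitz_dotRZ.
Qed.

Lemma Cmod_trig_poly_le L c x : Cmod (trig_poly L c x) <= coef_l1 L c.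
Proof.
  eapply Rle_trans; [apply Cmod_csum | apply rsum_le]. intros xi _.
  rewrite Cmod_mult, Cmod_cexp2pi; lra.
Qed.

Lemma trig_poly_mul_conj L c xi x :
  (trig_poly L c x * Cconj (cexp2pi (dotRZ x xi)))%C =
  csum L (fun eta => c eta * cexp2pi (dotRZ x eta - dotRZ x xi))%C.
Proof.
  unfold trig_poly; induction L as [|eta L IH]; [unfold csum; simpl; ring |].
  rewrite !csum_cons, <- IH, cexp2pi_minus. ring.
Qed.

Lemma lipschitzC_character_sum k L (c : list Z -> C) xi :
  lipschitzC k (fun x => csum L (fun eta => c eta * cexp2pi (dotRZ x eta - dotRZ x xi))%C).
Proof.
  apply lipschitzC_csum; intros eta _. apply lipschitzC_scal, lipschitzC_character.
Qed.

Lemma intC_trig_poly_coef n L c xi : NoDup L -> (forall eta, In eta L -> length eta = n) ->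
  In xi L -> intC n (fun x => trig_poly L c x * Cconj (cexp2pi (dotRZ x xi)))%C = c xi.
Proof.
  intros hN hL hI. rewrite (intC_ext n _ _ (fun x _ => trig_poly_mul_conj L c xi x)).
  rewrite intC_csum.
  - rewrite <- (csum_delta L c xi hN hI). unfold csum; f_equal; apply map_ext_in; intros eta he.
    rewrite intC_scal, intC_character by (auto; apply lipschitzC_character). reflexivity.
  - intros eta _. apply lipschitzC_scal, lipschitzC_character.
Qed.

Lemma Cmod_coef_le_intT n L c xi : NoDup L -> (forall eta, In eta L -> length eta = n) ->
  In xi L -> Cmod (c xi) <= 2 * intT n (fun x => Cmod (trig_poly L c x)).
Proof.
  intros hN hL hI. rewrite <- (intC_trig_poly_coef n L c xi) by auto.
  rewrite (intT_ext n _ (fun x => Cmod (trig_poly L c x * Cconj (cexp2pi (dotRZ x xi)))%C))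
    by (intros; rewrite Cmod_mult, Cmod_conj, Cmod_cexp2pi; ring).
  apply Cmod_intC_le. rewrite (functional_extensionality _ _ (trig_poly_mul_conj L c xi)).
  apply lipschitzC_character_sum.
Qed.

Lemma lipschitz_rpow_Cmod_trig_poly k L c p : 1 <= p ->
  lipschitz k (fun x => rpow (Cmod (trig_poly L c x)) p).
Proof.
  intros hp. pose proof (coef_l1_ge0 L c).
  apply (lipschitz_comp_on k (fun u => 0 <= u <= coef_l1 L c) _ (fun u => rpow u p)
           (p * rpow (coef_l1 L c + 1) (p - 1))).
  - apply lipschitz_Cmod, lipschitzC_trig_poly.
  - pose proof (rpow_ge0 (coef_l1 L c + 1) (p - 1)); nra.
  - intros x _; split; [apply Cmod_ge_0 | apply Cmod_trig_poly_le].
  - intros a b ha hb; apply rpow_lipschitz; auto.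
Qed.

(* Young's inequality [F <= A (1 - 1/p) + A^(1-p) F^p / p], integrated and taken at
   [A = (intT F^p)^(1/p)]. *)
Lemma intT_le_Lp k F p : 1 <= p -> lipschitz k F -> lipschitz k (fun x => rpow (F x) p) ->
  (forall x, length x = k -> 0 <= F x) ->
  intT k F <= rpow (intT k (fun x => rpow (F x) p)) (/ p).
Proof.
  intros hp HF HFp Hpos.
  set (I := intT k (fun x => rpow (F x) p)).
  assert (I0 : 0 <= I) by (apply intT_ge0; auto; intros; apply rpow_ge0).
  assert (Y : forall A, 0 < A -> intT k F <= A * (1 - / p) + / p * rpow A (1 - p) * I).
  { intros A hA. unfold I. rewrite <- intT_scal, <- (intT_const k (A * (1 - / p))), <- intT_plus
      by (try apply lipschitz_scal; auto; apply lipschitz_const).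
    apply intT_le; auto; [apply lipschitz_plus; [apply lipschitz_const | apply lipschitz_scal; auto] |].
    intros x hx. apply young_rpow; auto. }
  assert (hp' : 0 < / p) by (apply Rinv_0_lt_compat; lra).
  destruct (Req_dec I 0) as [EI|NI].
  - rewrite EI, rpow_le0 by lra. destruct (Rle_lt_dec (intT k F) 0) as [h|h]; auto.
    specialize (Y (intT k F / 2) ltac:(lra)). rewrite EI, Rmult_0_r, Rplus_0_r in Y.
    assert (/ p <= 1) by (rewrite <- Rinv_1; apply Rinv_le_contravar; lra). nra.
  - set (A := rpow I (/ p)). assert (hA : 0 < A) by (apply rpow_gt0; lra).
    assert (E : rpow A (1 - p) * I = A).
    { unfold A. rewrite rpow_rpow by lra.
      rewrite <- (rpow_1 I) at 2 by lra. rewrite <- rpow_plus by lra. f_equal; field; lra. }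
    specialize (Y A hA). rewrite Rmult_assoc, E in Y. fold A. lra.
Qed.

Lemma intT_rpow_trig_poly_ge0 k L c p : 1 <= p -> 0 <= intT k (fun x => rpow (Cmod (trig_poly L c x)) p).
Proof. intros hp; apply intT_ge0; [apply lipschitz_rpow_Cmod_trig_poly; auto | intros; apply rpow_ge0]. Qed.

Lemma Lpnorm_trig_poly_le k L c p : 1 <= p -> Lpnorm k p (trig_poly L c) <= coef_l1 L c.
Proof.
  intros hp. unfold Lpnorm. pose proof (coef_l1_ge0 L c).
  assert (I1 : intT k (fun x => rpow (Cmod (trig_poly L c x)) p) <= rpow (coef_l1 L c) p).
  { apply intT_ub; [apply lipschitz_rpow_Cmod_trig_poly; auto |]. intros x _.
    apply rpow_le; [split; [apply Cmod_ge_0 | apply Cmod_trig_poly_le] | lra]. }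
  rewrite <- (rpow_inv (coef_l1 L c) p) by lra.
  apply rpow_le; [split; [apply intT_rpow_trig_poly_ge0 |] | apply Rlt_le, Rinv_0_lt_compat]; lra.
Qed.

Lemma Cmod_coef_le_Lpnorm n L c p xi : 1 <= p -> NoDup L ->
  (forall eta, In eta L -> length eta = n) -> In xi L ->
  Cmod (c xi) <= 2 * Lpnorm n p (trig_poly L c).
Proof.
  intros hp hN hL hI. eapply Rle_trans; [apply Cmod_coef_le_intT; eauto |].
  apply Rmult_le_compat_l; [lra |]. apply intT_le_Lp; auto.
  - apply lipschitz_Cmod, lipschitzC_trig_poly.
  - apply lipschitz_rpow_Cmod_trig_poly; auto.
  - intros; apply Cmod_ge_0.
Qed.

Lemma Lpnorm_trig_poly_ext k p L c d : (forall xi, In xi L -> c xi = d xi) ->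
  Lpnorm k p (trig_poly L c) = Lpnorm k p (trig_poly L d).
Proof.
  intros H. unfold trig_poly, csum. do 2 f_equal. apply functional_extensionality; intros x.
  f_equal. apply map_ext_in; intros xi hxi; rewrite H; auto.
Qed.

Lemma trig_poly_scal L l c x : trig_poly L (cscal l c) x = (l * trig_poly L c x)%C.
Proof.
  unfold trig_poly; induction L; [unfold csum; simpl; ring |].
  rewrite !csum_cons, IHL. unfold cscal; ring.
Qed.

Lemma trig_poly_add L c d x : trig_poly L (cadd c d) x = (trig_poly L c x + trig_poly L d x)%C.
Proof.
  unfold trig_poly; induction L; [unfold csum; simpl; ring |].
  rewrite !csum_cons, IHL. unfold cadd; ring.
Qed.

Lemma Lpnorm_trig_poly_scal k p L l c : 1 <= p ->
  Lpnorm k p (trig_poly L (cscal l c)) = Cmod l * Lpnorm k p (trig_poly L c).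
Proof.
  intros hp. unfold Lpnorm.
  rewrite (intT_ext k _ (fun x => rpow (Cmod l) p * rpow (Cmod (trig_poly L c x)) p)).
  2: { intros x _. rewrite <- rpow_mult, <- Cmod_mult by apply Cmod_ge_0. do 2 f_equal.
       apply trig_poly_scal. }
  rewrite intT_scal by (apply lipschitz_rpow_Cmod_trig_poly; auto).
  rewrite rpow_mult, rpow_inv by (try apply rpow_ge0; try apply intT_rpow_trig_poly_ge0;
    try apply Cmod_ge_0; lra). reflexivity.
Qed.

Lemma Lpnorm_trig_poly_add k p L c d : 1 <= p ->
  Lpnorm k p (trig_poly L (cadd c d)) <=
  2 * rpow 2 (/ p) * (Lpnorm k p (trig_poly L c) + Lpnorm k p (trig_poly L d)).
Proof.
  intros hp. unfold Lpnorm.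
  set (Ic := intT k (fun x => rpow (Cmod (trig_poly L c x)) p)).
  set (Id := intT k (fun x => rpow (Cmod (trig_poly L d x)) p)).
  assert (hc : 0 <= Ic) by (apply intT_rpow_trig_poly_ge0; auto).
  assert (hd : 0 <= Id) by (apply intT_rpow_trig_poly_ge0; auto).
  assert (hpi : 0 < / p) by (apply Rinv_0_lt_compat; lra).
  assert (B : intT k (fun x => rpow (Cmod (trig_poly L (cadd c d) x)) p) <= rpow 2 p * (Ic + Id)).
  { unfold Ic, Id. rewrite <- intT_plus, <- intT_scal
      by (try apply lipschitz_plus; apply lipschitz_rpow_Cmod_trig_poly; auto).
    apply intT_le; [apply lipschitz_rpow_Cmod_trig_poly; auto
                   | apply lipschitz_scal, lipschitz_plus; apply lipschitz_rpow_Cmod_trig_poly; auto |].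
    intros x _.
    rewrite trig_poly_add.
    eapply Rle_trans; [apply rpow_le; [split; [apply Cmod_ge_0 | apply Cmod_triangle] | lra] |].
    apply rpow_plus_le; try apply Cmod_ge_0; lra. }
  eapply Rle_trans; [apply rpow_le; [split; [apply intT_rpow_trig_poly_ge0; auto | exact B] | lra] |].
  rewrite rpow_mult, rpow_inv by (try apply rpow_ge0; lra).
  pose proof (rpow_plus_le Ic Id (/ p) hc hd ltac:(lra)). lra.
Qed.

(** * Dyadic shells of the lattice *)

Section Lattice.
Local Open Scope Z_scope.

Definition zrange (N : nat) : list Z := map (fun j => Z.of_nat j - Z.of_nat N) (seq 0 (2 * N + 1)).

Lemma In_zrange N z : In z (zrange N) <-> - Z.of_nat N <= z <= Z.of_nat N.
Proof.
  unfold zrange. rewrite in_map_iff. split.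
  - intros [j [<- hj]]. apply in_seq in hj. lia.
  - intros h. exists (Z.to_nat (z + Z.of_nat N)). split; [lia |]. apply in_seq. lia.
Qed.

Lemma NoDup_zrange N : NoDup (zrange N).
Proof. apply NoDup_map_NoDup_ForallPairs; [| apply seq_NoDup]. intros a b _ _ h. lia. Qed.

Lemma box_S n N : box (S n) N = flat_map (fun z => map (cons z) (box n N)) (zrange N).
Proof. reflexivity. Qed.

Lemma In_box n N xi : In xi (box n N) <->
  length xi = n /\ (forall z, In z xi -> - Z.of_nat N <= z <= Z.of_nat N).
Proof.
  revert xi; induction n as [|n IH]; intros xi.
  - simpl. split.
    + intros [<-|[]]. split; auto. intros z [].
    + intros [h _]. destruct xi; [auto | discriminate].
  - rewrite box_S, in_flat_map. split.
    + intros [z [hz hx]]. apply in_map_iff in hx. destruct hx as [y [<- hy]].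
      apply IH in hy. destruct hy as [hl hy]. apply In_zrange in hz. split; [simpl; auto |].
      intros w [<-|hw]; auto.
    + intros [hl hz]. destruct xi as [|z xi]; [discriminate |]. exists z. split.
      * apply In_zrange, hz; simpl; auto.
      * apply in_map, IH. split; [simpl in hl; lia |]. intros w hw; apply hz; simpl; auto.
Qed.

Lemma NoDup_box n N : NoDup (box n N).
Proof.
  induction n as [|n IH]; [simpl; constructor; [intros [] | constructor] |].
  rewrite box_S. pose proof (NoDup_zrange N) as HZ.
  induction (zrange N) as [|z Zs IHZ]; simpl; [constructor |].
  inversion HZ; subst. apply NoDup_app.
  - apply NoDup_map_NoDup_ForallPairs; auto. intros a b _ _ h; injection h; auto.
  - apply IHZ; auto.
  - intros a ha hb. apply in_map_iff in ha. destruct ha as [y [<- _]].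
    apply in_flat_map in hb. destruct hb as [z' [hz' hb]]. apply in_map_iff in hb.
    destruct hb as [y' [e _]]. injection e as e _. subst. contradiction.
Qed.

Lemma length_box n N : length (box n N) = ((2 * N + 1) ^ n)%nat.
Proof.
  induction n; [reflexivity |].
  rewrite box_S, (flat_map_constant_length (c := length (box n N))).
  - unfold zrange. rewrite length_map, length_seq, IHn. simpl. lia.
  - intros; apply length_map.
Qed.

Lemma normsq_cons z xi : normsq (z :: xi) = z * z + normsq xi.
Proof. reflexivity. Qed.

Lemma normsq_ge0 xi : 0 <= normsq xi.
Proof. induction xi; [simpl; lia |]. rewrite normsq_cons. nia. Qed.

Lemma normsq_coord xi z : In z xi -> z * z <= normsq xi.
Proof.
  induction xi as [|a xi IH]; [intros [] |]. rewrite normsq_cons. intros [<-|h].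
  - pose proof (normsq_ge0 xi); lia.
  - specialize (IH h). nia.
Qed.

Lemma normsq_le_box xi N : (forall z, In z xi -> - N <= z <= N) ->
  normsq xi <= Z.of_nat (length xi) * N * N.
Proof.
  induction xi as [|z xi IH]; intros H; [simpl; lia |]. rewrite normsq_cons.
  specialize (IH (fun w h => H w (or_intror h))). specialize (H z (or_introl eq_refl)).
  simpl length. rewrite Nat2Z.inj_succ. nia.
Qed.

Lemma pow4 k : 4 ^ k = 2 ^ k * 2 ^ k.
Proof. rewrite <- Z.pow_mul_l. reflexivity. Qed.

Lemma pow4_mono a b : (a <= b)%nat -> 4 ^ Z.of_nat a <= 4 ^ Z.of_nat b.
Proof. intros; apply Z.pow_le_mono_r; lia. Qed.

Lemma block_ub m xi : block m xi = true -> normsq xi < 4 ^ Z.of_nat (S m).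
Proof.
  destruct m; simpl block; intros h; [apply Z.ltb_lt in h; simpl; lia |].
  apply andb_prop in h. destruct h as [_ h]. apply Z.ltb_lt in h. auto.
Qed.

Lemma block_lb m xi : (1 <= m)%nat -> block m xi = true -> 4 ^ Z.of_nat m <= normsq xi.
Proof.
  destruct m; [lia |]. simpl block. intros _ h.
  apply andb_prop in h. destruct h as [h _]. apply Z.leb_le in h. auto.
Qed.

Lemma block_intro m xi : (m = O \/ 4 ^ Z.of_nat m <= normsq xi) ->
  normsq xi < 4 ^ Z.of_nat (S m) -> block m xi = true.
Proof.
  intros h1 h2. destruct m; simpl block.
  - apply Z.ltb_lt. simpl in h2. lia.
  - destruct h1 as [h1|h1]; [discriminate |].
    apply andb_true_intro; split; [apply Z.leb_le | apply Z.ltb_lt]; auto.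
Qed.

Lemma block_unique j j' xi : block j xi = true -> block j' xi = true -> j = j'.
Proof.
  intros h h'.
  assert (forall a b, (a < b)%nat -> block a xi = true -> block b xi = true -> False).
  { intros a b hab ha hb. pose proof (block_ub a xi ha). pose proof (block_lb b xi ltac:(lia) hb).
    pose proof (pow4_mono (S a) b hab). lia. }
  destruct (Nat.lt_trichotomy j j') as [l|[e|l]]; auto; exfalso; eauto.
Qed.

Definition shell (n j : nat) : list (list Z) := filter (block j) (box n (2 ^ (S j))).

Lemma In_shell n j xi : In xi (shell n j) <-> length xi = n /\ block j xi = true.
Proof.
  unfold shell. rewrite filter_In, In_box. split; [intros [[h _] hb]; auto |].
  intros [hl hb]. split; auto. split; auto. intros z hz.
  pose proof (block_ub j xi hb). pose proof (normsq_coord xi z hz).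
  rewrite Nat2Z.inj_pow, pow4 in *. change (Z.of_nat 2) with 2.
  assert (0 <= 2 ^ Z.of_nat (S j)) by (apply Z.pow_nonneg; lia). nia.
Qed.

Lemma NoDup_shell n j : NoDup (shell n j).
Proof. apply NoDup_filter, NoDup_box. Qed.

Lemma normsq_repeat0 k : normsq (repeat 0 k) = 0.
Proof. induction k; [reflexivity |]. simpl repeat. rewrite normsq_cons, IHk. lia. Qed.

Lemma shell_nonempty n j : (1 <= n)%nat -> exists xi, In xi (shell n j).
Proof.
  intros hn. destruct n as [|n]; [lia |]. destruct j as [|j].
  - exists (repeat 0 (S n)). apply In_shell. split; [apply repeat_length |].
    apply block_intro; [left; auto |]. rewrite normsq_repeat0. simpl. lia.
  - exists (2 ^ Z.of_nat (S j) :: repeat 0 n). apply In_shell.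
    split; [simpl; rewrite repeat_length; auto |].
    apply block_intro; rewrite normsq_cons, normsq_repeat0, Z.add_0_r, <- pow4; [right; lia |].
    apply Z.pow_lt_mono_r; lia.
Qed.

Fixpoint ball (n J : nat) : list (list Z) :=
  match J with O => shell n O | S J' => ball n J' ++ shell n (S J') end.

Lemma In_ball n J xi : In xi (ball n J) <-> length xi = n /\ normsq xi < 4 ^ Z.of_nat (S J).
Proof.
  induction J as [|J IH]; simpl ball.
  - rewrite In_shell. split; intros [h1 h2]; split; auto; [apply block_ub | apply block_intro]; auto.
  - rewrite in_app_iff, IH, In_shell. split.
    + intros [[h1 h2]|[h1 h2]]; split; auto; [| apply block_ub; auto].
      pose proof (pow4_mono (S J) (S (S J)) ltac:(lia)). lia.
    + intros [h1 h2]. destruct (Z.lt_ge_cases (normsq xi) (4 ^ Z.of_nat (S J))) as [l|g];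
        [left; auto | right]. split; auto. apply block_intro; auto.
Qed.

Lemma In_ball_shell n J xi : In xi (ball n J) <-> exists j, (j <= J)%nat /\ In xi (shell n j).
Proof.
  induction J as [|J IH]; simpl ball.
  - split; [intros h; exists O; auto | intros [j [hj h]]; replace j with O in h by lia; auto].
  - rewrite in_app_iff, IH. split.
    + intros [[j [hj h]]|h]; [exists j; split; [lia | auto] | exists (S J); auto].
    + intros [j [hj h]]. destruct (Nat.eq_dec j (S J)) as [->|ne];
        [right; auto | left; exists j; split; [lia | auto]].
Qed.

Lemma NoDup_ball n J : NoDup (ball n J).
Proof.
  induction J as [|J IH]; simpl; [apply NoDup_shell |].
  apply NoDup_app; auto; [apply NoDup_shell |]. intros a ha hb.
  apply In_ball_shell in ha. destruct ha as [j [hj ha]]. apply In_shell in ha; apply In_shell in hb.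
  pose proof (block_unique _ _ _ (proj2 ha) (proj2 hb)). lia.
Qed.

Lemma ball_prefix n J K : (J <= K)%nat -> exists r, ball n K = ball n J ++ r.
Proof.
  induction 1 as [|K h [r IH]]; [exists []; rewrite app_nil_r; auto |].
  exists (r ++ shell n (S K)). simpl. rewrite IH, app_assoc. auto.
Qed.

Lemma ball_length_gt n J : (1 <= n)%nat -> (S J <= length (ball n J))%nat.
Proof.
  intros hn. induction J as [|J IH]; simpl ball.
  - destruct (shell_nonempty n 0 hn) as [xi hxi]. destruct (shell n 0); [destruct hxi | simpl; lia].
  - rewrite length_app. destruct (shell_nonempty n (S J) hn) as [xi hxi].
    destruct (shell n (S J)); [destruct hxi | simpl; lia].
Qed.

Lemma ball_0 J : ball 0 J = [[]].
Proof.
  induction J as [|J IH]; [reflexivity |]. simpl ball. rewrite IH.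
  unfold shell. change (box 0 (2 ^ S (S J))) with [@nil Z].
  assert (H : block (S J) [] = false).
  { unfold block. replace (4 ^ Z.of_nat (S J) <=? normsq []) with false; [reflexivity |].
    symmetry; apply Z.leb_gt. simpl normsq. apply Z.pow_pos_nonneg; lia. }
  unfold filter; rewrite H; reflexivity.
Qed.

Lemma ball_incl_box n J N' : (2 ^ (S J) <= N')%nat -> incl (ball n J) (box n N').
Proof.
  intros hN x hx. apply In_ball in hx. destruct hx as [hl hs]. apply In_box. split; auto.
  intros z hz. pose proof (normsq_coord x z hz). rewrite pow4 in hs.
  apply inj_le in hN. rewrite Nat2Z.inj_pow in hN. change (Z.of_nat 2) with 2 in hN.
  assert (0 <= 2 ^ Z.of_nat (S J)) by (apply Z.pow_nonneg; lia). nia.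
Qed.

Lemma box_incl_ball n N' : incl (box n N') (ball n (n * N' * N')).
Proof.
  intros x hx. apply In_box in hx. destruct hx as [hl hb]. apply In_ball. split; auto.
  pose proof (normsq_le_box x (Z.of_nat N') hb). rewrite hl in H.
  pose proof (Z.pow_gt_lin_r 4 (Z.of_nat (n * N' * N')) ltac:(lia) ltac:(lia)).
  pose proof (pow4_mono (n * N' * N') (S (n * N' * N')) ltac:(lia)).
  rewrite !Nat2Z.inj_mul in *. lia.
Qed.

(* The balls are nested prefixes of one another and [ball n k] has more than [k] points
   (for [n >= 1]), so the [k]-th point of [ball n k] enumerates [Z^n] without repetition. *)
Definition lattice_enum (n k : nat) : option (list Z) := nth_error (ball n k) k.

Lemma lattice_enum_stable n k J xi : lattice_enum n k = Some xi -> (k <= J)%nat ->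
  nth_error (ball n J) k = Some xi.
Proof.
  intros h hk. destruct (ball_prefix n k J hk) as [r ->]. rewrite nth_error_app1; auto.
  apply nth_error_Some. unfold lattice_enum in h. congruence.
Qed.

Lemma lattice_enum_in_ball n k xi : lattice_enum n k = Some xi -> In xi (ball n k).
Proof. apply nth_error_In. Qed.

Lemma lattice_enum_inj n k k' xi : lattice_enum n k = Some xi -> lattice_enum n k' = Some xi -> k = k'.
Proof.
  intros h h'. set (J := Nat.max k k').
  pose proof (lattice_enum_stable n k J xi h ltac:(lia)).
  pose proof (lattice_enum_stable n k' J xi h' ltac:(lia)).
  pose proof (NoDup_ball n J) as ND. rewrite NoDup_nth_error in ND.
  apply ND; [apply nth_error_Some |]; congruence.
Qed.

Lemma lattice_enum_onto_ball n J xi : In xi (ball n J) ->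
  exists i, (i < length (ball n J))%nat /\ lattice_enum n i = Some xi.
Proof.
  intros hx. destruct (In_nth_error _ _ hx) as [i h]. exists i.
  assert (hi : (i < length (ball n J))%nat) by (apply nth_error_Some; congruence).
  split; auto. unfold lattice_enum.
  destruct (Nat.le_gt_cases J i) as [l|l].
  - destruct (ball_prefix n J i l) as [r ->]. rewrite nth_error_app1; auto.
  - destruct (Nat.eq_dec n 0) as [->|hn].
    + rewrite ball_0 in hi, h |- *. simpl in hi. replace i with 0%nat in * by lia. exact h.
    + destruct (ball_prefix n i J ltac:(lia)) as [r E1]. rewrite E1 in h.
      pose proof (ball_length_gt n i ltac:(lia)). rewrite nth_error_app1 in h; auto; lia.
Qed.

Fixpoint block_index (J : nat) (xi : list Z) : nat :=
  match J with O => O | S J' => if block (S J') xi then S J' else block_index J' xi end.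

Lemma block_index_spec j J xi : block j xi = true -> (j <= J)%nat -> block_index J xi = j.
Proof.
  induction J as [|J IH]; intros hb hj; [simpl; lia |].
  change (block_index (S J) xi) with (if block (S J) xi then S J else block_index J xi).
  destruct (block (S J) xi) eqn:e; [symmetry; eapply block_unique; eauto |].
  destruct (Nat.eq_dec j (S J)) as [->|ne]; [congruence |]. apply IH; auto; lia.
Qed.

Lemma lattice_enum_shell n k xi : lattice_enum n k = Some xi -> In xi (shell n (block_index k xi)).
Proof.
  intros h. apply lattice_enum_in_ball, In_ball_shell in h. destruct h as [j [hj h]].
  rewrite (block_index_spec j); auto. apply In_shell in h; tauto.
Qed.

End Lattice.

Lemma length_shell_le n j : INR (length (shell n j)) <= 8 ^ n * (2 ^ n) ^ j.
Proof.
  apply Rle_trans with (INR ((2 ^ (S (S (S j)))) ^ n)).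
  - apply le_INR. eapply Nat.le_trans; [apply filter_length_le |]. rewrite length_box.
    apply Nat.pow_le_mono_l. pose proof (Nat.pow_nonzero 2 j ltac:(lia)). simpl. lia.
  - rewrite !pow_INR. simpl INR. replace (1 + 1) with 2 by ring.
    replace (2 ^ S (S (S j))) with (8 * 2 ^ j) by (simpl; ring).
    rewrite Rpow_mult_distr, <- !pow_mult, Nat.mul_comm. lra.
Qed.

Lemma is_series_eventually_zero {K : AbsRing} {V : NormedModule K} (u : nat -> V) N :
  (forall k, (N < k)%nat -> u k = zero) -> is_series u (sum_n u N).
Proof.
  intros H. apply (filterlim_ext_loc (fun _ => sum_n u N)); [| apply filterlim_const].
  exists N. intros m hm. induction hm; auto. rewrite sum_Sn, H, plus_zero_r by lia. auto.
Qed.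

Lemma sum_n_ge0 (u : nat -> R) j : (forall k, 0 <= u k) -> 0 <= sum_n u j.
Proof.
  intros H; induction j; [rewrite sum_O; auto | rewrite sum_Sn].
  unfold plus; simpl. specialize (H (S j)); lra.
Qed.

Lemma sum_n_le_Series (u : nat -> R) j : (forall k, 0 <= u k) -> ex_series u -> sum_n u j <= Series u.
Proof.
  intros H hs. assert (L : is_lim_seq (sum_n u) (Series u)) by (apply Series_correct; auto).
  apply (is_lim_seq_incr_compare _ _ L).
  intros m. rewrite sum_Sn. unfold plus; simpl. specialize (H (S m)); lra.
Qed.

Lemma Series_ge_term (u : nat -> R) j : (forall k, 0 <= u k) -> ex_series u -> u j <= Series u.
Proof.
  intros H hs. eapply Rle_trans; [| apply sum_n_le_Series; eauto].
  destruct j; [rewrite sum_O; lra |]. rewrite sum_Sn. unfold plus; simpl.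
  pose proof (sum_n_ge0 u j H); lra.
Qed.

Lemma Series_nonneg (u : nat -> R) : (forall k, 0 <= u k) -> ex_series u -> 0 <= Series u.
Proof. intros H hs. eapply Rle_trans; [apply (H O) | apply Series_ge_term; auto]. Qed.

Lemma ex_series_nonneg_le (e D : nat -> R) : (forall k, 0 <= e k <= D k) -> ex_series D -> ex_series e.
Proof.
  intros H hD. apply (@ex_series_le R_AbsRing R_CompleteNormedModule _ D); auto.
  intros k. unfold norm; simpl; unfold abs; simpl. rewrite Rabs_right by apply Rle_ge, H. apply H.
Qed.

(** * Besov spaces *)

Section Besov.
Variables (n : nat) (w p q : R).
Hypothesis hp : 1 <= p.
Hypothesis hq : 0 < q.

Local Notation term := (besov_term n w p q).
Local Notation in_B := (in_besov n w p q).
Local Notation norm_B := (besov_norm n w p q).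

Definition block_norm (c : list Z -> C) (j : nat) : R := Lpnorm n p (blockpoly n c j).

Lemma block_norm_eq c j : block_norm c j = Lpnorm n p (trig_poly (shell n j) c).
Proof. reflexivity. Qed.

Lemma block_norm_ge0 c j : 0 <= block_norm c j.
Proof. apply rpow_ge0. Qed.

Lemma block_norm_ext c d j : (forall xi, In xi (shell n j) -> c xi = d xi) ->
  block_norm c j = block_norm d j.
Proof. intros H. rewrite !block_norm_eq. apply Lpnorm_trig_poly_ext; auto. Qed.

Lemma block_norm_zero (c : list Z -> C) j : (forall xi, In xi (shell n j) -> c xi = 0%C) ->
  block_norm c j = 0.
Proof.
  intros H. apply Rle_antisym; [| apply block_norm_ge0].
  eapply Rle_trans; [apply Lpnorm_trig_poly_le; auto |].
  eapply Rle_trans; [apply (rsum_le_const _ _ 0) | lra].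
  intros xi hxi; rewrite H, Cmod_0 by auto; lra.
Qed.

Lemma Cmod_coef_le_block_norm c j xi : In xi (shell n j) -> Cmod (c xi) <= 2 * block_norm c j.
Proof.
  intros h. apply Cmod_coef_le_Lpnorm; auto; [apply NoDup_shell |].
  intros eta he; apply In_shell in he; tauto.
Qed.

Lemma block_norm_dominated c d j lam : 0 <= lam ->
  (forall xi, In xi (shell n j) -> Cmod (d xi) <= lam * Cmod (c xi)) ->
  block_norm d j <= 2 * lam * INR (length (shell n j)) * block_norm c j.
Proof.
  intros hl H. eapply Rle_trans; [apply Lpnorm_trig_poly_le; auto |].
  eapply Rle_trans; [apply (rsum_le_const _ _ (lam * (2 * block_norm c j))) |].
  - intros xi hxi. eapply Rle_trans; [apply H; auto |].
    apply Rmult_le_compat_l; auto. apply Cmod_coef_le_block_norm; auto.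
  - right; unfold shell; ring.
Qed.

Lemma besov_term_ge0 c j : 0 <= term c j.
Proof. apply Rmult_le_pos; [left; apply exp_pos | apply rpow_ge0]. Qed.

Lemma besov_term_eq c j : term c j = rpow (Rpower 2 (INR j * w) * block_norm c j) q.
Proof.
  unfold besov_term. rewrite rpow_mult by (apply block_norm_ge0 || (left; apply exp_pos)).
  rewrite (rpow_pos (Rpower 2 (INR j * w))), Rpower_mult by apply exp_pos. reflexivity.
Qed.

Lemma besov_term_le c d j mu : 0 <= mu -> block_norm d j <= mu * block_norm c j ->
  term d j <= rpow mu q * term c j.
Proof.
  intros hm H. pose proof (block_norm_ge0 c j); pose proof (block_norm_ge0 d j).
  pose proof (exp_pos (INR j * w * ln 2)).
  rewrite !besov_term_eq, <- rpow_mult by (auto; apply Rmult_le_pos; unfold Rpower; lra).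
  apply rpow_le; [split; [apply Rmult_le_pos |]; unfold Rpower; nra | lra].
Qed.

Lemma besov_norm_ge0 c : 0 <= norm_B c.
Proof. apply rpow_ge0. Qed.

Lemma in_besov_dominated c d K : 0 <= K -> (forall j, term d j <= K * term c j) -> in_B c ->
  in_B d /\ norm_B d <= rpow K (/ q) * norm_B c.
Proof.
  intros hK H hc. assert (hKc : ex_series (fun j => K * term c j)) by exact (ex_series_scal_l K _ hc).
  assert (hd : in_B d).
  { apply (ex_series_nonneg_le _ _ (fun j => conj (besov_term_ge0 d j) (H j)) hKc). }
  split; auto. unfold besov_norm.
  assert (S1 : Series (term d) <= K * Series (term c)).
  { rewrite <- Series_scal_l. apply Series_le; auto. intros j; split; [apply besov_term_ge0 | apply H]. }
  assert (S0 : 0 <= Series (term d)) by (apply Series_nonneg; auto; intros; apply besov_term_ge0).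
  assert (S2 : 0 <= Series (term c)) by (apply Series_nonneg; auto; intros; apply besov_term_ge0).
  rewrite <- rpow_mult by auto. apply rpow_le; [lra | left; apply Rinv_0_lt_compat; auto].
Qed.

Lemma in_besov_of_finite (c : list Z -> C) J :
  (forall j xi, (J < j)%nat -> In xi (shell n j) -> c xi = 0%C) -> in_B c.
Proof.
  intros H. exists (sum_n (term c) J). apply (@is_series_eventually_zero R_AbsRing R_NormedModule).
  intros k hk. change (term c k = 0). rewrite besov_term_eq, block_norm_zero.
  - rewrite Rmult_0_r; apply rpow_le0; lra.
  - intros xi hxi; apply (H k); auto.
Qed.

Lemma besov_add c d : in_B c -> in_B d -> in_B (cadd c d).
Proof.
  intros hc hd. set (K0 := 2 * rpow 2 (/ p)).
  assert (hK0 : 0 <= K0) by (unfold K0; pose proof (rpow_ge0 2 (/ p)); lra).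
  apply (ex_series_nonneg_le _ (fun j => rpow K0 q * (rpow 2 q * (term c j + term d j)))).
  - intros j. split; [apply besov_term_ge0 |]. rewrite !besov_term_eq.
    set (a := Rpower 2 (INR j * w)). assert (ha : 0 < a) by apply exp_pos.
    pose proof (block_norm_ge0 c j); pose proof (block_norm_ge0 d j); pose proof (block_norm_ge0 (cadd c d) j).
    apply Rle_trans with (rpow (K0 * (a * block_norm c j + a * block_norm d j)) q).
    { apply rpow_le; [split; [nra |] | lra].
      pose proof (Lpnorm_trig_poly_add n p (shell n j) c d hp). fold K0 in H2.
      rewrite !block_norm_eq; nra. }
    rewrite rpow_mult by nra. apply Rmult_le_compat_l; [apply rpow_ge0 | apply rpow_plus_le; nra].
  - exact (ex_series_scal_l _ _ (ex_series_scal_l _ _ (ex_series_plus (term c) (term d) hc hd))).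
Qed.

Lemma besov_scal l c : in_B c -> in_B (cscal l c).
Proof.
  intros hc. apply (in_besov_dominated c _ (rpow (Cmod l) q)); auto; [apply rpow_ge0 |].
  intros j. apply besov_term_le; [apply Cmod_ge_0 |].
  rewrite !block_norm_eq, Lpnorm_trig_poly_scal by auto. lra.
Qed.

Lemma block_norm_le_besov_norm c j : in_B c ->
  block_norm c j <= Rpower 2 (- (INR j * w)) * norm_B c.
Proof.
  intros hc. unfold besov_norm.
  assert (hS : term c j <= Series (term c)) by (apply Series_ge_term; auto; intros; apply besov_term_ge0).
  rewrite besov_term_eq in hS. set (a := Rpower 2 (INR j * w)) in hS.
  assert (ha : 0 < a) by apply exp_pos. pose proof (block_norm_ge0 c j).
  replace (Rpower 2 (- (INR j * w))) with (/ a) by (unfold a, Rpower; rewrite <- exp_Ropp; f_equal; ring).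
  replace (block_norm c j) with (/ a * rpow (rpow (a * block_norm c j) q) (/ q))
    by (rewrite rpow_inv by nra; field; lra).
  apply Rmult_le_compat_l; [left; apply Rinv_0_lt_compat; auto |].
  apply rpow_le; [split; [apply rpow_ge0 | auto] | left; apply Rinv_0_lt_compat; auto].
Qed.

Lemma Cmod_coef_le_besov_norm c j xi : in_B c -> In xi (shell n j) ->
  Cmod (c xi) <= 2 * Rpower 2 (- (INR j * w)) * norm_B c.
Proof.
  intros hc hx. pose proof (block_norm_le_besov_norm c j hc).
  pose proof (Cmod_coef_le_block_norm c j xi hx). lra.
Qed.

End Besov.

(** * Decay of the symbol on the dyadic shells *)

Lemma Rpower_le_of_exp_nonpos x y e : e <= 0 -> 0 < x <= y -> Rpower y e <= Rpower x e.
Proof.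
  intros he [hx hxy]. unfold Rpower. pose proof (ln_le x y hx hxy).
  destruct (Rle_lt_or_eq_dec (e * ln y) (e * ln x)) as [h|h]; [nra | | rewrite h; lra].
  left; apply exp_increasing; auto.
Qed.

Lemma Rpower2_pow m j : Rpower 2 m ^ j = Rpower 2 (INR j * m).
Proof. rewrite <- Rpower_pow, Rpower_mult by apply exp_pos. f_equal; ring. Qed.

Definition shell_ratio (n : nat) (m : R) : R := 2 ^ n * Rpower 2 m.

Lemma shell_ratio_bounds n m : INR n + m < 0 -> 0 < shell_ratio n m < 1.
Proof.
  intros h. unfold shell_ratio. rewrite <- (Rpower_pow n 2), <- Rpower_plus by lra.
  split; [apply exp_pos |]. rewrite <- (Rpower_O 2) by lra. apply Rpower_lt; lra.
Qed.

Lemma rsum_shell_le n j (g : list Z -> R) B :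
  (forall xi, In xi (shell n j) -> g xi <= B) -> 0 <= B ->
  rsum (shell n j) g <= 8 ^ n * (2 ^ n) ^ j * B.
Proof.
  intros H hB. eapply Rle_trans; [apply rsum_le_const, H |].
  apply Rmult_le_compat_r; [auto | apply length_shell_le].
Qed.

Lemma rsum_ball_le n (g : list Z -> R) C s K : 0 <= s < 1 ->
  (forall j, rsum (shell n j) g <= C * s ^ j) -> rsum (ball n K) g <= C * (1 - s ^ S K) / (1 - s).
Proof.
  intros hs H. induction K as [|K IH]; simpl ball.
  - eapply Rle_trans; [apply H | right; simpl; field; lra].
  - rewrite rsum_app. pose proof (H (S K)).
    replace (C * (1 - s ^ S (S K)) / (1 - s)) with (C * (1 - s ^ S K) / (1 - s) + C * s ^ S K)
      by (simpl; field; lra). lra.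
Qed.

Section Symbol.
Variables (n : nat) (m Ca : R) (a : list Z -> C).
Hypothesis ha : forall xi, length xi = n -> Cmod (a xi) <= Ca * japbr_pow xi m.
Hypothesis hm : m <= 0.

Lemma symbol_const_ge0 : 0 <= Ca.
Proof.
  specialize (ha (repeat 0%Z n) (repeat_length _ _)). pose proof (Cmod_ge_0 (a (repeat 0%Z n))).
  assert (0 < japbr_pow (repeat 0%Z n) m) by apply exp_pos. nra.
Qed.

Lemma Cmod_symbol_le_shell j xi : In xi (shell n j) -> Cmod (a xi) <= Ca * Rpower 2 m ^ j.
Proof.
  intros h. apply In_shell in h. destruct h as [hl hb]. eapply Rle_trans; [apply ha; auto |].
  apply Rmult_le_compat_l; [apply symbol_const_ge0 |]. unfold japbr_pow.
  pose proof (normsq_ge0 xi) as hN. apply IZR_le in hN.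
  destruct j as [|j].
  - simpl. rewrite <- (Rpower_O (1 + IZR (normsq xi))) at 2 by lra. apply Rle_Rpower; lra.
  - pose proof (block_lb (S j) xi ltac:(lia) hb) as hl4. apply IZR_le in hl4.
    rewrite <- pow_IZR in hl4. rewrite Rpower2_pow.
    eapply Rle_trans; [apply (Rpower_le_of_exp_nonpos (IZR 4 ^ S j)); [lra | split; [apply pow_lt |]; lra] |].
    rewrite <- Rpower_pow, Rpower_mult by lra. unfold Rpower. apply Req_le. f_equal.
    replace (IZR 4) with (2 * 2) by (simpl; lra). rewrite ln_mult by lra. field.
Qed.

Lemma block_norm_mult_le p c d j : 1 <= p ->
  (forall xi, In xi (shell n j) -> Cmod (d xi) <= Cmod (a xi) * Cmod (c xi)) ->
  block_norm n p d j <= 2 * 8 ^ n * Ca * shell_ratio n m ^ j * block_norm n p c j.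
Proof.
  intros hp Hd. pose proof symbol_const_ge0. set (rho := Rpower 2 m).
  assert (hrho : 0 <= rho ^ j) by (apply pow_le; left; apply exp_pos).
  eapply Rle_trans; [apply (block_norm_dominated n p hp c _ j (Ca * rho ^ j)); [nra |] |].
  - intros xi hxi. eapply Rle_trans; [apply Hd; auto |].
    apply Rmult_le_compat_r; [apply Cmod_ge_0 | apply Cmod_symbol_le_shell; auto].
  - pose proof (length_shell_le n j); pose proof (block_norm_ge0 n p c j).
    unfold shell_ratio; fold rho. rewrite Rpow_mult_distr.
    replace (2 * 8 ^ n * Ca * ((2 ^ n) ^ j * rho ^ j) * block_norm n p c j)
      with (2 * (Ca * rho ^ j) * (8 ^ n * (2 ^ n) ^ j) * block_norm n p c j) by ring.
    apply Rmult_le_compat_r; auto. apply Rmult_le_compat_l; [nra | auto].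
Qed.

Hypothesis hnm : INR n + m < 0.

Lemma in_besov_Tmult w p q c : 1 <= p -> 0 < q -> in_besov n w p q c -> in_besov n w p q (Tmult a c).
Proof.
  intros hp hq hc. pose proof symbol_const_ge0. pose proof (shell_ratio_bounds n m hnm).
  assert (h8 : 0 <= 2 * 8 ^ n * Ca) by (pose proof (pow_le 8 n ltac:(lra)); nra).
  apply (in_besov_dominated n w p q hq c _ (rpow (2 * 8 ^ n * Ca) q)); auto; [apply rpow_ge0 |].
  intros j. apply (besov_term_le n w p q hq); auto.
  eapply Rle_trans; [apply (block_norm_mult_le p c); auto; intros; unfold Tmult; rewrite Cmod_mult; lra |].
  apply Rmult_le_compat_r; [apply block_norm_ge0 |].
  assert (shell_ratio n m ^ j <= 1) by (rewrite <- (pow1 j); apply pow_incr; lra). nra.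
Qed.

End Symbol.

(** * A nuclear decomposition of the multiplier *)

Definition character (xi : list Z) : list Z -> C :=
  fun eta => if list_eq_dec Z.eq_dec eta xi then 1%C else 0%C.

Lemma coef_l1_character L xi : NoDup L -> In xi L -> coef_l1 L (character xi) = 1.
Proof.
  induction L as [|x L IH]; intros hN hI; [destruct hI |]. inversion hN; subst.
  unfold coef_l1, rsum, character in *; simpl.
  destruct (list_eq_dec Z.eq_dec x xi) as [->|ne].
  - rewrite Cmod_1. replace (fold_right _ _ _) with 0; [ring |].
    clear - H1. induction L as [|y L IHL]; simpl; auto.
    destruct (list_eq_dec Z.eq_dec y xi) as [->|]; [exfalso; apply H1; left; auto |].
    rewrite Cmod_0, <- IHL by (intros h; apply H1; right; auto). ring.
  - destruct hI as [->|hI]; [congruence |]. rewrite Cmod_0, IH by auto. ring.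
Qed.

Lemma character_other n xi j j' eta :
  In xi (shell n j) -> In eta (shell n j') -> j <> j' -> character xi eta = 0%C.
Proof.
  intros h h' hne. unfold character. destruct (list_eq_dec Z.eq_dec eta xi) as [->|]; auto.
  apply In_shell in h; apply In_shell in h'. exfalso; apply hne.
  eapply block_unique; [apply h | apply h'].
Qed.

Section Characters.
Variables (n : nat) (w p q : R).
Hypothesis hp : 1 <= p.
Hypothesis hq : 0 < q.

Lemma in_besov_zero : in_besov n w p q (fun _ => 0%C).
Proof. apply (in_besov_of_finite n w p q hp _ O); auto. Qed.

Lemma in_besov_character xi j : In xi (shell n j) -> in_besov n w p q (character xi).
Proof.
  intros h. apply (in_besov_of_finite n w p q hp _ j). intros j' eta hj he.
  eapply character_other; eauto; lia.
Qed.

Lemma besov_norm_character_le xi j : In xi (shell n j) ->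
  besov_norm n w p q (character xi) <= Rpower 2 (INR j * w).
Proof.
  intros h. set (u := besov_term n w p q (character xi)).
  assert (Hz : forall k, k <> j -> u k = 0).
  { intros k hk. unfold u. rewrite besov_term_eq, (block_norm_zero n p hp), Rmult_0_r;
      [apply rpow_le0; lra |]. intros eta he. eapply character_other; eauto. }
  assert (HS : Series u = u j).
  { apply is_series_unique. replace (u j) with (sum_n u j).
    - apply (@is_series_eventually_zero R_AbsRing R_NormedModule). intros k hk; apply Hz; lia.
    - clear - Hz. induction j as [|j IH]; [apply sum_O |]. rewrite sum_Sn.
      assert (sum_n u j = 0).
      { transitivity (sum_n (fun _ => 0) j); [apply sum_n_ext_loc; intros k hk; apply Hz; lia |].
        rewrite sum_n_const; simpl; ring. }
      rewrite H. unfold plus; simpl; ring. }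
  unfold besov_norm; fold u. rewrite HS. unfold u. rewrite besov_term_eq.
  assert (hl : block_norm n p (character xi) j <= 1).
  { eapply Rle_trans; [apply Lpnorm_trig_poly_le; auto |].
    rewrite coef_l1_character; [lra | apply NoDup_shell | auto]. }
  pose proof (block_norm_ge0 n p (character xi) j). assert (h2 : 0 < Rpower 2 (INR j * w)) by apply exp_pos.
  rewrite rpow_inv by nra. nra.
Qed.

End Characters.

Definition mult_functional (n : nat) (a : list Z -> C) (k : nat) (c : list Z -> C) : C :=
  match lattice_enum n k with Some xi => (a xi * c xi)%C | None => 0%C end.

Definition mult_vector (n : nat) (k : nat) : list Z -> C :=
  match lattice_enum n k with Some xi => character xi | None => fun _ => 0%C end.

Definition mult_functional_bound (n : nat) (w : R) (a : list Z -> C) (k : nat) : R :=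
  match lattice_enum n k with
  | Some xi => 2 * Rpower 2 (- (INR (block_index k xi) * w)) * Cmod (a xi)
  | None => 0
  end.

Definition enum_point (n k : nat) : list (list Z) :=
  match lattice_enum n k with Some x => [x] | None => [] end.

Definition enum_points (n : nat) (l : list nat) : list (list Z) := flat_map (enum_point n) l.

Lemma NoDup_enum_points n l : NoDup l -> NoDup (enum_points n l).
Proof.
  induction 1 as [|k l hk hN IH]; [constructor |]. unfold enum_points; simpl flat_map.
  fold (enum_points n l). unfold enum_point at 1. destruct (lattice_enum n k) as [x|] eqn:e; simpl; auto.
  constructor; auto. intros hx. apply in_flat_map in hx. destruct hx as [k' [hk' hx]].
  unfold enum_point in hx. destruct (lattice_enum n k') as [x'|] eqn:e'; [| destruct hx]. destruct hx as [hxx|[]]. subst x'.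
  pose proof (lattice_enum_inj n k k' x e e'); subst; contradiction.
Qed.

Lemma enum_points_incl_ball n K : incl (enum_points n (seq 0 (S K))) (ball n K).
Proof.
  intros x hx. apply in_flat_map in hx. destruct hx as [k [hk hx]]. apply in_seq in hk.
  unfold enum_point in hx. destruct (lattice_enum n k) as [x'|] eqn:e; [| destruct hx]. destruct hx as [hxx|[]]. subst x'.
  apply lattice_enum_in_ball in e. destruct (ball_prefix n k K ltac:(lia)) as [rr ->].
  apply in_app_iff; auto.
Qed.

Lemma rsum_flat_map {A B} (h : A -> list B) l g :
  rsum (flat_map h l) g = rsum l (fun a => rsum (h a) g).
Proof. induction l as [|a l IH]; [reflexivity |]. simpl. rewrite rsum_app, IH. reflexivity. Qed.

Lemma sum_n_rsum (f : nat -> R) K : sum_n f K = rsum (seq 0 (S K)) f.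
Proof.
  induction K; [rewrite sum_O; unfold rsum; simpl; ring |].
  rewrite sum_Sn, IHK, (seq_S (S K)), rsum_app. unfold rsum at 3; simpl. unfold plus; simpl; ring.
Qed.

Section Nuclear.
Variables (n : nat) (w p q r m Ca : R) (a : list Z -> C).
Hypothesis hp : 1 <= p.
Hypothesis hq : 0 < q.
Hypothesis hr : 0 < r.
Hypothesis ha : forall xi, length xi = n -> Cmod (a xi) <= Ca * japbr_pow xi m.
Hypothesis hm0 : m <= 0.
Hypothesis hnm : INR n + m < 0.
Hypothesis hnmr : INR n + m * r < 0.

Local Notation phi := (mult_functional n a).
Local Notation y := (mult_vector n).
Local Notation M := (mult_functional_bound n w a).
Local Notation norm_B := (besov_norm n w p q).

Lemma dual_elem_mult_functional k : dual_elem n w p q (phi k) (M k).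
Proof.
  unfold dual_elem, mult_functional, mult_functional_bound.
  destruct (lattice_enum n k) as [xi|] eqn:e.
  - pose proof (lattice_enum_shell n k xi e) as hE. set (j := block_index k xi) in *.
    pose proof (exp_pos (- (INR j * w) * ln 2)); pose proof (Cmod_ge_0 (a xi)).
    split; [unfold Rpower; nra |]. split; [intros; unfold cadd; ring |].
    split; [intros; unfold cscal; ring |].
    intros c hc. rewrite Cmod_mult. pose proof (Cmod_coef_le_besov_norm n w p q hp hq c j xi hc hE).
    unfold Rpower in *; nra.
  - split; [lra |]. split; [intros; ring |]. split; [intros; ring |].
    intros c _. rewrite Cmod_0. pose proof (besov_norm_ge0 n w p q c); lra.
Qed.

Lemma in_besov_mult_vector k : in_besov n w p q (y k).
Proof.
  unfold mult_vector. destruct (lattice_enum n k) as [xi|] eqn:e; [| apply in_besov_zero; auto].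
  eapply in_besov_character; eauto. apply (lattice_enum_shell n k xi e).
Qed.

Local Notation weight := (fun xi => rpow (2 * Cmod (a xi)) r).

Lemma nuclear_term_le k : rpow (M k * norm_B (y k)) r <= rsum (enum_point n k) weight.
Proof.
  unfold mult_functional_bound, mult_vector, enum_point.
  destruct (lattice_enum n k) as [xi|] eqn:e; unfold rsum; simpl;
    [| rewrite Rmult_0_l, rpow_le0; lra].
  rewrite Rplus_0_r. pose proof (lattice_enum_shell n k xi e) as hE. set (j := block_index k xi) in *.
  pose proof (besov_norm_character_le n w p q hp hq xi j hE).
  pose proof (besov_norm_ge0 n w p q (character xi)); pose proof (Cmod_ge_0 (a xi)).
  assert (E2 : Rpower 2 (- (INR j * w)) * Rpower 2 (INR j * w) = 1).
  { rewrite <- Rpower_plus, <- (Rpower_O 2) by lra. f_equal; ring. }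
  pose proof (exp_pos (- (INR j * w) * ln 2)). fold (Rpower 2 (- (INR j * w))) in H2.
  apply rpow_le; [split; [repeat apply Rmult_le_pos |]; try lra | lra].
  replace (2 * Cmod (a xi)) with (2 * Rpower 2 (- (INR j * w)) * Cmod (a xi) * Rpower 2 (INR j * w))
    by (transitivity (2 * Cmod (a xi) * (Rpower 2 (- (INR j * w)) * Rpower 2 (INR j * w)));
        [ring | rewrite E2; ring]).
  apply Rmult_le_compat_l; [repeat apply Rmult_le_pos |]; lra.
Qed.

Lemma rsum_shell_symbol_rpow_le j :
  rsum (shell n j) weight <= 8 ^ n * rpow (2 * Ca) r * shell_ratio n (m * r) ^ j.
Proof.
  pose proof (symbol_const_ge0 n m Ca a ha) as hCa. set (rho := Rpower 2 m).
  assert (hrho : 0 < rho) by apply exp_pos.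
  eapply Rle_trans; [apply (rsum_shell_le _ _ _ (rpow (2 * Ca) r * rpow rho r ^ j)) |].
  - intros xi hxi. rewrite <- rpow_pow, <- rpow_mult by (auto; try apply pow_le; lra).
    apply rpow_le; [| lra]. pose proof (Cmod_ge_0 (a xi)). split; [lra |].
    pose proof (Cmod_symbol_le_shell n m Ca a ha hm0 j xi hxi). fold rho in H0. nra.
  - apply Rmult_le_pos; [apply rpow_ge0 | apply pow_le, rpow_ge0].
  - unfold shell_ratio. rewrite Rpow_mult_distr, <- Rpower_mult. fold rho.
    rewrite <- (rpow_pos rho) by auto. right; ring.
Qed.

Lemma ex_series_nuclear_terms : ex_series (fun k => rpow (M k * norm_B (y k)) r).
Proof.
  pose proof (shell_ratio_bounds n (m * r) hnmr) as hs. set (s := shell_ratio n (m * r)) in *.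
  set (Cs := 8 ^ n * rpow (2 * Ca) r).
  assert (hCs : 0 <= Cs) by (unfold Cs; pose proof (pow_le 8 n ltac:(lra)); pose proof (rpow_ge0 (2 * Ca) r); nra).
  destruct (ex_finite_lim_seq_incr (sum_n (fun k => rpow (M k * norm_B (y k)) r)) (Cs / (1 - s)))
    as [l hl]; [| | exists l; exact hl].
  - intros K. rewrite sum_Sn. unfold plus; simpl. pose proof (rpow_ge0 (M (S K) * norm_B (y (S K))) r); lra.
  - intros K. rewrite sum_n_rsum.
    eapply Rle_trans; [apply rsum_le; intros k _; apply nuclear_term_le |].
    rewrite <- rsum_flat_map. fold (enum_points n (seq 0 (S K))).
    eapply Rle_trans; [apply rsum_incl; [apply NoDup_enum_points, seq_NoDup | apply enum_points_incl_ball
                                       | intros; apply rpow_ge0] |].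
    eapply Rle_trans; [apply (rsum_ball_le n weight Cs s K); [lra | apply rsum_shell_symbol_rpow_le] |].
    apply Rmult_le_compat_r; [left; apply Rinv_0_lt_compat; lra |].
    pose proof (pow_le s (S K) ltac:(lra)). nra.
Qed.

Lemma mult_term_other k c xi : lattice_enum n k <> Some xi -> (phi k c * y k xi)%C = 0%C.
Proof.
  intros h. unfold mult_functional, mult_vector. destruct (lattice_enum n k) as [x|]; [| ring].
  unfold character. destruct (list_eq_dec Z.eq_dec xi x) as [->|]; [congruence | ring].
Qed.

Lemma mult_term_self k c xi : lattice_enum n k = Some xi -> (phi k c * y k xi)%C = (a xi * c xi)%C.
Proof.
  intros h. unfold mult_functional, mult_vector. rewrite h. unfold character.
  destruct (list_eq_dec Z.eq_dec xi xi); [ring | congruence].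
Qed.

Lemma psum_mult_not_enum K c xi : (forall k, (k < K)%nat -> lattice_enum n k <> Some xi) ->
  psum phi y c K xi = 0%C.
Proof.
  induction K as [|K IH]; intros H; [reflexivity |]. simpl; unfold cadd, cscal.
  rewrite IH, mult_term_other by (try intros; apply H; lia). ring.
Qed.

Lemma psum_mult_enum K c xi k0 : lattice_enum n k0 = Some xi -> (k0 < K)%nat ->
  psum phi y c K xi = (a xi * c xi)%C.
Proof.
  intros h0. induction K as [|K IH]; intros hK; [lia |]. simpl; unfold cadd, cscal.
  destruct (Nat.eq_dec k0 K) as [<-|ne].
  - rewrite mult_term_self, psum_mult_not_enum; [ring | | auto].
    intros k hk e. pose proof (lattice_enum_inj n k k0 xi e h0); lia.
  - rewrite IH, mult_term_other; [ring | | lia].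
    intros e. pose proof (lattice_enum_inj n K k0 xi e h0); lia.
Qed.

Local Notation remainder c K := (csub (Tmult a c) (psum phi y c K)).

Lemma Cmod_remainder_le c K xi : Cmod (remainder c K xi) <= Cmod (a xi) * Cmod (c xi).
Proof.
  unfold csub, Tmult.
  destruct (classic (exists k0, (k0 < K)%nat /\ lattice_enum n k0 = Some xi))
    as [[k0 [hk he]]|hn].
  - rewrite (psum_mult_enum K c xi k0) by auto.
    replace (a xi * c xi - a xi * c xi)%C with (RtoC 0) by ring.
    rewrite Cmod_0. pose proof (Cmod_ge_0 (a xi)); pose proof (Cmod_ge_0 (c xi)); nra.
  - rewrite psum_mult_not_enum by (intros k hk e; apply hn; eauto).
    replace (a xi * c xi - 0)%C with (a xi * c xi)%C by ring. rewrite Cmod_mult; lra.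
Qed.

Lemma remainder_ball c K xi J : In xi (ball n J) -> (length (ball n J) <= K)%nat ->
  remainder c K xi = 0%C.
Proof.
  intros h hK. destruct (lattice_enum_onto_ball n J xi h) as [i [hi he]]. unfold csub, Tmult.
  rewrite (psum_mult_enum K c xi i) by (auto; lia). ring.
Qed.

Lemma besov_norm_remainder_le c J K : in_besov n w p q c -> (length (ball n J) <= K)%nat ->
  norm_B (remainder c K) <= 2 * 8 ^ n * Ca * shell_ratio n m ^ S J * norm_B c.
Proof.
  intros hc hK. pose proof (symbol_const_ge0 n m Ca a ha) as hCa.
  pose proof (shell_ratio_bounds n m hnm) as hs. set (s := shell_ratio n m) in *.
  set (B := 2 * 8 ^ n * Ca). assert (hB : 0 <= B) by (unfold B; pose proof (pow_le 8 n ltac:(lra)); nra).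
  pose proof (pow_le s (S J) ltac:(lra)).
  destruct (in_besov_dominated n w p q hq c (remainder c K) (rpow (B * s ^ S J) q)) as [_ HN];
    auto; [apply rpow_ge0 | | rewrite rpow_inv in HN by nra; exact HN].
  intros j. apply (besov_term_le n w p q hq); [nra |].
  destruct (Nat.le_gt_cases j J) as [hj|hj].
  - rewrite (block_norm_zero n p hp); [apply Rmult_le_pos; [nra | apply block_norm_ge0] |].
    intros xi hxi. apply (remainder_ball c K xi J); auto. apply In_ball_shell; eauto.
  - eapply Rle_trans; [apply (block_norm_mult_le n m Ca a ha hm0 p c); auto; intros; apply Cmod_remainder_le |].
    apply Rmult_le_compat_r; [apply block_norm_ge0 |]. fold B s. apply Rmult_le_compat_l; auto.
    rewrite <- (Nat.sub_add (S J) j hj), pow_add. pose proof (pow_le s (S J) ltac:(lra)).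
    assert (s ^ (j - S J) <= 1) by (rewrite <- (pow1 (j - S J)); apply pow_incr; lra). nra.
Qed.

Lemma is_lim_remainder c : in_besov n w p q c -> is_lim_seq (fun K => norm_B (remainder c K)) 0.
Proof.
  intros hc. pose proof (shell_ratio_bounds n m hnm) as hs.
  set (B := 2 * 8 ^ n * Ca * norm_B c).
  assert (HL : is_lim_seq (fun J => B * shell_ratio n m ^ J) 0).
  { replace (Finite 0) with (Rbar_mult B 0) by (simpl; f_equal; ring).
    apply is_lim_seq_scal_l, is_lim_seq_geom. rewrite Rabs_right; lra. }
  apply is_lim_seq_spec in HL. apply is_lim_seq_spec. intros eps.
  destruct (HL eps) as [J HJ]. exists (length (ball n (S J))). intros K hK.
  specialize (HJ (S (S J)) ltac:(lia)). pose proof (besov_norm_ge0 n w p q (remainder c K)).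
  pose proof (besov_norm_remainder_le c (S J) K hc hK).
  rewrite Rminus_0_r, Rabs_right by lra. rewrite Rminus_0_r in HJ.
  eapply Rle_lt_trans; [| apply Rle_lt_trans with (2 := HJ); apply Rle_abs]. unfold B; lra.
Qed.

Lemma nuclear_rep_mult : nuclear_rep n w p q r (Tmult a) phi M y.
Proof.
  split; [exact dual_elem_mult_functional |]. split; [exact in_besov_mult_vector |].
  split; [exact ex_series_nuclear_terms | exact is_lim_remainder].
Qed.

End Nuclear.

(** * The trace *)

Lemma filterlim_C_iff (f : nat -> C) l : filterlim f eventually (locally l) <->
  (forall eps, 0 < eps -> exists N, forall K, (N <= K)%nat -> Cmod (f K - l)%C < eps).
Proof.
  rewrite (@filterlim_locally_ball_norm C_AbsRing nat C_NormedModule); [| typeclasses eauto].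
  split.
  - intros H eps he. destruct (H (mkposreal eps he)) as [N HN]. exists N; intros K hK; apply (HN K hK).
  - intros H eps. destruct (H eps (cond_pos eps)) as [N HN]. exists N; intros K hK; apply (HN K hK).
Qed.

Lemma Cmod_Series_le (u : nat -> C) (l : C) (v : nat -> R) :
  @is_series C_AbsRing C_NormedModule u l -> (forall k, Cmod (u k) <= v k) -> ex_series v ->
  Cmod l <= Series v.
Proof.
  intros hu hv hs.
  assert (hv0 : forall k, 0 <= v k) by (intros k; eapply Rle_trans; [apply Cmod_ge_0 | apply hv]).
  assert (P : forall K, Cmod (sum_n u K) <= Series v).
  { intros K. eapply Rle_trans; [| apply (sum_n_le_Series v K hv0 hs)].
    induction K; [rewrite !sum_O; apply hv |]. rewrite !sum_Sn.
    eapply Rle_trans; [apply Cmod_triangle |]. specialize (hv (S K)). unfold plus in *; simpl in *; lra. }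
  apply Rnot_lt_le; intros hlt. pose proof (proj1 (filterlim_C_iff (sum_n u) l) hu) as hlim.
  destruct (hlim (Cmod l - Series v) ltac:(lra)) as [N HN]. specialize (HN N (le_n N)).
  specialize (P N). pose proof (Cmod_triangle (sum_n u N) (l - sum_n u N)%C).
  replace (sum_n u N + (l - sum_n u N))%C with l in H by ring.
  rewrite Cmod_sub_sym in HN. lra.
Qed.

Lemma is_lim_sum_n_pointwise (e : nat -> nat -> R) K0 : (forall k, is_lim_seq (fun N => e N k) 0) ->
  is_lim_seq (fun N => sum_n (e N) K0) 0.
Proof.
  intros H. induction K0.
  - apply (is_lim_seq_ext (fun N => e N O)); [intros; rewrite sum_O; auto | apply H].
  - apply (is_lim_seq_ext (fun N => sum_n (e N) K0 + e N (S K0))); [intros; rewrite sum_Sn; auto |].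
    replace (Finite 0) with (Finite (0 + 0)) by (f_equal; ring). apply is_lim_seq_plus'; auto.
Qed.

Lemma is_lim_Series_dominated (e : nat -> nat -> R) (D : nat -> R) :
  (forall N k, 0 <= e N k <= D k) -> ex_series D ->
  (forall k, is_lim_seq (fun N => e N k) 0) -> is_lim_seq (fun N => Series (e N)) 0.
Proof.
  intros H hD hk. apply is_lim_seq_spec. intros eps. pose proof (cond_pos eps) as he.
  assert (LD : is_lim_seq (sum_n D) (Series D)) by (apply Series_correct; auto).
  apply is_lim_seq_spec in LD.
  destruct (LD (pos_div_2 eps)) as [K0 HK0]. specialize (HK0 K0 (le_n _)).
  pose proof (is_lim_sum_n_pointwise e K0 hk) as LF. apply is_lim_seq_spec in LF.
  destruct (LF (pos_div_2 eps)) as [N0 HN0]. exists N0. intros N hN.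
  specialize (HN0 N hN); simpl in HN0, HK0. rewrite Rminus_0_r in *.
  assert (hs : ex_series (e N)) by (apply (ex_series_nonneg_le _ D); auto).
  rewrite (Series_incr_n (e N) (S K0)), (Series_incr_n D (S K0)) in * by (auto; lia).
  simpl Init.Nat.pred in *. rewrite <- sum_n_Reals in *.
  assert (S1 : Series (fun k => e N (S K0 + k)%nat) <= Series (fun k => D (S K0 + k)%nat)).
  { apply Series_le; [intros k; apply H | apply ex_series_incr_n; auto]. }
  assert (S0 : 0 <= Series (fun k => e N (S K0 + k)%nat)).
  { apply Series_nonneg; [intros; apply H | apply ex_series_incr_n; auto]. }
  pose proof (sum_n_ge0 (e N) K0 (fun k => proj1 (H N k))).
  rewrite Rabs_right in HN0 by lra. rewrite Rabs_right by lra.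
  apply Rabs_lt_between in HK0. lra.
Qed.

Lemma ex_series_of_rpow (D : nat -> R) r : 0 < r <= 1 -> (forall k, 0 <= D k) ->
  ex_series (fun k => rpow (D k) r) -> ex_series D.
Proof.
  intros hr hD hs. set (S := Series (fun k => rpow (D k) r)). set (Kc := rpow S (/ r - 1)).
  assert (hr1 : 0 <= / r - 1) by (assert (1 <= / r) by (rewrite <- Rinv_1; apply Rinv_le_contravar; lra); lra).
  apply (ex_series_nonneg_le D (fun k => Kc * rpow (D k) r)); [| exact (ex_series_scal_l Kc _ hs)].
  intros k. split; auto.
  pose proof (Series_ge_term (fun k => rpow (D k) r) k (fun k => rpow_ge0 _ _) hs) as hk. fold S in hk.
  destruct (Req_dec (D k) 0) as [e0|ne].
  - rewrite e0. pose proof (rpow_ge0 S (/ r - 1)); pose proof (rpow_ge0 0 r). unfold Kc; nra.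
  - assert (hpos : 0 < rpow (D k) r) by (apply rpow_gt0; specialize (hD k); lra).
    rewrite <- (rpow_inv (D k) r) at 1 by (auto; lra).
    replace (/ r) with (1 + (/ r - 1)) at 1 by ring. rewrite rpow_plus, rpow_1 by lra.
    unfold Kc. rewrite Rmult_comm. apply Rmult_le_compat_r; [lra | apply rpow_le; lra].
Qed.

Definition char_sum (L : list (list Z)) (c : list Z -> C) : list Z -> C :=
  fold_right (fun xi acc => cadd (cscal (c xi) (character xi)) acc) (fun _ => 0%C) L.

Lemma char_sum_out L c eta : ~ In eta L -> char_sum L c eta = 0%C.
Proof.
  induction L as [|x L IH]; intros h; [reflexivity |]. simpl; unfold cadd, cscal, character.
  rewrite IH by (intros h'; apply h; right; auto).
  destruct (list_eq_dec Z.eq_dec eta x) as [->|]; [exfalso; apply h; left; auto | ring].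
Qed.

Lemma char_sum_in L c eta : NoDup L -> In eta L -> char_sum L c eta = c eta.
Proof.
  induction L as [|x L IH]; intros hN h; [destruct h |]. inversion hN; subst.
  simpl; unfold cadd, cscal, character. destruct (list_eq_dec Z.eq_dec eta x) as [->|ne].
  - rewrite char_sum_out by auto. ring.
  - destruct h as [->|h]; [congruence |]. rewrite IH by auto. ring.
Qed.

Definition ball_sum (n : nat) (a : list Z -> C) (N : nat) : C := csum (ball n N) a.

Definition ball_tail (n N : nat) (c : list Z -> C) : list Z -> C := csub c (char_sum (ball n N) c).

Lemma shell_notin_ball n j N eta : In eta (shell n j) -> (N < j)%nat -> ~ In eta (ball n N).
Proof.
  intros h hj h'. apply In_ball_shell in h'. destruct h' as [j' [hj' h']].
  apply In_shell in h; apply In_shell in h'. pose proof (block_unique _ _ _ (proj2 h) (proj2 h')). lia.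
Qed.

Section BallTail.
Variables (n : nat) (w p q : R).
Hypothesis hp : 1 <= p.
Hypothesis hq : 0 < q.

Local Notation term := (besov_term n w p q).
Local Notation in_B := (in_besov n w p q).
Local Notation norm_B := (besov_norm n w p q).

Lemma besov_sub c d : in_B c -> in_B d -> in_B (csub c d).
Proof.
  intros hc hd. replace (csub c d) with (cadd c (cscal (RtoC (-1)) d))
    by (apply functional_extensionality; intros xi; unfold cadd, cscal, csub; ring).
  apply besov_add, besov_scal; auto.
Qed.

Lemma in_besov_char_sum L c N : incl L (ball n N) -> in_B (char_sum L c).
Proof.
  intros hI. apply (in_besov_of_finite n w p q hp _ N). intros j eta hj he.
  apply char_sum_out. intros h. apply (shell_notin_ball n j N eta he hj), hI; auto.
Qed.

Lemma besov_term_ball_tail N c j : term (ball_tail n N c) j = if le_dec j N then 0 else term c j.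
Proof.
  destruct (le_dec j N) as [hj|hj].
  - rewrite besov_term_eq, (block_norm_zero n p hp), Rmult_0_r; [apply rpow_le0; lra |].
    intros xi hxi. unfold ball_tail, csub. rewrite char_sum_in; [ring | apply NoDup_ball |].
    apply In_ball_shell; eauto.
  - rewrite !besov_term_eq. do 2 f_equal. apply block_norm_ext. intros xi hxi. unfold ball_tail, csub.
    rewrite char_sum_out; [ring |]. apply (shell_notin_ball n j N xi hxi). lia.
Qed.

Lemma besov_norm_ball_tail_le N c : in_B c -> in_B (ball_tail n N c) /\ norm_B (ball_tail n N c) <= norm_B c.
Proof.
  intros hc. destruct (in_besov_dominated n w p q hq c (ball_tail n N c) 1) as [h1 h2]; auto; [lra | |].
  - intros j. rewrite besov_term_ball_tail. destruct (le_dec j N); [pose proof (besov_term_ge0 n w p q c j) |]; lra.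
  - rewrite rpow_1_l in h2. split; auto; lra.
Qed.

Lemma Series_besov_term_ball_tail N c : in_B c ->
  Series (term (ball_tail n N c)) = Series (term c) - sum_n (term c) N.
Proof.
  intros hc. destruct (besov_norm_ball_tail_le N c hc) as [hz _].
  rewrite (Series_incr_n _ (S N)), (Series_incr_n (term c) (S N)) by (auto; lia).
  simpl Init.Nat.pred. rewrite <- !sum_n_Reals.
  replace (sum_n (term (ball_tail n N c)) N) with 0.
  - rewrite (Series_ext (fun k => term (ball_tail n N c) (S N + k)%nat) (fun k => term c (S N + k)%nat));
      [ring |]. intros k. rewrite besov_term_ball_tail. destruct (le_dec _ N); [lia | reflexivity].
  - transitivity (sum_n (fun _ => 0) N); [| apply sum_n_ext_loc; intros k hk;
      rewrite besov_term_ball_tail; destruct (le_dec k N); [reflexivity | lia]].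
    rewrite sum_n_const; simpl; ring.
Qed.

Lemma is_lim_ball_tail c : in_B c -> is_lim_seq (fun N => norm_B (ball_tail n N c)) 0.
Proof.
  intros hc. set (u := term c).
  assert (L0 : is_lim_seq (fun N => Series u - sum_n u N) 0).
  { replace (Finite 0) with (Finite (Series u - Series u)) by (f_equal; ring).
    apply is_lim_seq_minus'; [apply is_lim_seq_const | apply Series_correct; auto]. }
  apply is_lim_seq_spec in L0. apply is_lim_seq_spec. intros eps. pose proof (cond_pos eps) as he.
  destruct (L0 (mkposreal (rpow eps q) (rpow_gt0 eps q he))) as [N0 HN0].
  exists N0. intros N hN. specialize (HN0 N hN); simpl in HN0. rewrite Rminus_0_r in *.
  rewrite Rabs_right by (apply Rle_ge, besov_norm_ge0). unfold besov_norm.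
  rewrite Series_besov_term_ball_tail by auto. fold u.
  assert (h0 : 0 <= Series u - sum_n u N).
  { pose proof (sum_n_le_Series u N (besov_term_ge0 n w p q c) hc). lra. }
  rewrite Rabs_right in HN0 by lra.
  rewrite <- (rpow_inv eps q) by lra. apply rpow_lt; [lra | apply Rinv_0_lt_compat; auto].
Qed.

End BallTail.

Lemma is_series_csum {A} (L : list A) (u : A -> nat -> C) (l : A -> C) :
  (forall x, In x L -> @is_series C_AbsRing C_NormedModule (u x) (l x)) ->
  @is_series C_AbsRing C_NormedModule (fun k => csum L (fun x => u x k)) (csum L l).
Proof.
  induction L as [|x L IH]; intros H.
  - replace (csum [] l) with (@sum_n C_AbsRing (fun _ => RtoC 0) 0) by (rewrite sum_O; reflexivity).
    apply (@is_series_eventually_zero C_AbsRing C_NormedModule); reflexivity.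
  - exact (@is_series_plus C_AbsRing C_NormedModule _ _ _ _ (H x (or_introl eq_refl))
             (IH (fun z h => H z (or_intror h)))).
Qed.

Section Trace.
Variables (n : nat) (w p q r m Ca : R) (a : list Z -> C).
Hypothesis hp : 1 <= p.
Hypothesis hq : 0 < q.
Hypothesis hr : 0 < r <= 1.
Hypothesis ha : forall xi, length xi = n -> Cmod (a xi) <= Ca * japbr_pow xi m.
Hypothesis hm0 : m <= 0.
Hypothesis hnm : INR n + m < 0.
Variables (phi : nat -> (list Z -> C) -> C) (M : nat -> R) (y : nat -> list Z -> C).
Hypothesis Hrep : nuclear_rep n w p q r (Tmult a) phi M y.

Local Notation in_B := (in_besov n w p q).
Local Notation norm_B := (besov_norm n w p q).

Lemma in_besov_rep_vector k : in_B (y k).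
Proof. apply Hrep. Qed.

Lemma in_besov_psum c K : in_B (psum phi y c K).
Proof.
  induction K; simpl; [apply in_besov_zero; auto |].
  apply besov_add, besov_scal, in_besov_rep_vector; auto.
Qed.

Lemma sum_n_psum c xi K : sum_n (fun k => phi k c * y k xi)%C K = psum phi y c (S K) xi.
Proof. induction K; [rewrite sum_O; simpl; unfold cadd, cscal; ring | rewrite sum_Sn, IHK; reflexivity]. Qed.

(* The coefficient at [xi] is a continuous functional, so the nuclear expansion of [T_a]
   applied to the character [e_xi] can be read off coefficientwise. *)
Lemma is_series_coef xi j : In xi (shell n j) ->
  @is_series C_AbsRing C_NormedModule (fun k => phi k (character xi) * y k xi)%C (a xi).
Proof.
  intros hx. assert (he : in_B (character xi)) by (eapply in_besov_character; eauto).
  destruct Hrep as [_ [_ [_ Hc]]]. specialize (Hc _ he). apply is_lim_seq_spec in Hc.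
  set (Rp := Rpower 2 (- (INR j * w))). assert (hRp : 0 < Rp) by apply exp_pos.
  apply filterlim_C_iff. intros eps heps.
  destruct (Hc (mkposreal (eps / (2 * Rp + 1)) ltac:(apply Rdiv_lt_0_compat; lra))) as [N HN].
  exists N. intros K hK. specialize (HN (S K) ltac:(lia)); simpl in HN. rewrite Rminus_0_r in HN.
  set (d := csub (Tmult a (character xi)) (psum phi y (character xi) (S K))) in HN.
  assert (hd : in_B d) by (apply besov_sub; auto; [eapply in_besov_Tmult | apply in_besov_psum]; eauto).
  pose proof (Cmod_coef_le_besov_norm n w p q hp hq d j xi hd hx) as HC. fold Rp in HC.
  replace (d xi) with (a xi - psum phi y (character xi) (S K) xi)%C in HC
    by (unfold d, csub, Tmult, character; destruct (list_eq_dec Z.eq_dec xi xi); [ring | congruence]).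
  rewrite Cmod_sub_sym, sum_n_psum. rewrite Rabs_right in HN by (apply Rle_ge, besov_norm_ge0).
  pose proof (besov_norm_ge0 n w p q d).
  apply Rle_lt_trans with ((2 * Rp + 1) * norm_B d); [nra |].
  replace eps with ((2 * Rp + 1) * (eps / (2 * Rp + 1))) by (field; lra).
  apply Rmult_lt_compat_l; [lra | auto].
Qed.

Lemma phi_char_sum k L c N : incl L (ball n N) ->
  phi k (char_sum L c) = csum L (fun xi => phi k (character xi) * c xi)%C.
Proof.
  destruct Hrep as [Hd _]. destruct (Hd k) as [_ [Hadd [Hs _]]].
  induction L as [|x L IH]; intros hI.
  - replace (char_sum [] c) with (cscal 0%C (fun _ : list Z => 0%C))
      by (apply functional_extensionality; intros; unfold cscal; simpl; ring).
    rewrite Hs by (apply in_besov_zero; auto). unfold csum; simpl; ring.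
  - assert (hx : In x (ball n N)) by (apply hI; left; auto).
    apply In_ball_shell in hx. destruct hx as [j [_ hx]].
    assert (hI' : incl L (ball n N)) by (intros z hz; apply hI; right; auto).
    assert (hx' : in_B (character x)) by (apply (in_besov_character n w p q hp x j hx)).
    simpl. rewrite Hadd; [| apply besov_scal; auto | apply (in_besov_char_sum n w p q hp L c N hI')].
    rewrite Hs, IH, csum_cons by auto. ring.
Qed.

Lemma is_series_phi_char_sum N :
  @is_series C_AbsRing C_NormedModule (fun k => phi k (char_sum (ball n N) (y k))) (ball_sum n a N).
Proof.
  apply (@is_series_ext C_AbsRing C_NormedModule
           (fun k => csum (ball n N) (fun xi => phi k (character xi) * y k xi)%C)).
  - intros k. symmetry. apply (phi_char_sum k _ _ N). intros z hz; auto.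
  - apply (is_series_csum (ball n N) (fun xi k => phi k (character xi) * y k xi)%C a).
    intros xi hxi. apply In_ball_shell in hxi. destruct hxi as [j [_ hxi]]. eapply is_series_coef; eauto.
Qed.

Local Notation D := (fun k => M k * norm_B (y k)).

Lemma rep_bound_ge0 k : 0 <= D k.
Proof.
  destruct Hrep as [Hd [Hy _]]. pose proof (besov_norm_ge0 n w p q (y k)).
  destruct (Hd k) as [hM _]. nra.
Qed.

Lemma ex_series_rep_bound : ex_series D.
Proof. apply (ex_series_of_rpow D r); auto; [apply rep_bound_ge0 | apply Hrep]. Qed.

Lemma Cmod_phi_le k c : in_B c -> Cmod (phi k c) <= M k * norm_B c.
Proof. destruct Hrep as [Hd _]. apply (Hd k). Qed.

Lemma Cmod_ball_sum_sub_le T N : @is_series C_AbsRing C_NormedModule (fun k => phi k (y k)) T ->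
  Cmod (ball_sum n a N - T)%C <= Series (fun k => M k * norm_B (ball_tail n N (y k))).
Proof.
  intros HT. destruct Hrep as [Hd [Hy _]]. rewrite Cmod_sub_sym.
  assert (Hsplit : forall k, phi k (y k) = (phi k (char_sum (ball n N) (y k)) + phi k (ball_tail n N (y k)))%C).
  { intros k. destruct (Hd k) as [_ [Hadd _]].
    rewrite <- Hadd; [| apply (in_besov_char_sum n w p q hp _ _ N); intros z hz; auto
                      | apply besov_norm_ball_tail_le; auto].
    f_equal. apply functional_extensionality; intros xi. unfold cadd, ball_tail, csub; ring. }
  apply (Cmod_Series_le (fun k => phi k (y k) - phi k (char_sum (ball n N) (y k)))%C).
  - exact (@is_series_minus C_AbsRing C_NormedModule _ _ _ _ HT (is_series_phi_char_sum N)).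
  - intros k. rewrite Hsplit. replace (_ + _ - _)%C with (phi k (ball_tail n N (y k))) by ring.
    apply Cmod_phi_le, besov_norm_ball_tail_le; auto.
  - apply (ex_series_nonneg_le _ D); [| apply ex_series_rep_bound]. intros k.
    destruct (besov_norm_ball_tail_le n w p q hp hq N (y k) (Hy k)) as [_ h].
    pose proof (besov_norm_ge0 n w p q (ball_tail n N (y k))). destruct (Hd k) as [hM _]. split; nra.
Qed.

Lemma nuclear_trace_ball_sum : exists T,
  @is_series C_AbsRing C_NormedModule (fun k => phi k (y k)) T /\
  filterlim (ball_sum n a) eventually (locally T).
Proof.
  destruct Hrep as [Hd [Hy _]].
  destruct (@ex_series_le C_AbsRing C_CompleteNormedModule (fun k => phi k (y k)) D) as [T HT];
    [intros k; apply Cmod_phi_le, Hy | apply ex_series_rep_bound |].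
  exists T. split; auto.
  set (e := fun N k => M k * norm_B (ball_tail n N (y k))).
  assert (HS : is_lim_seq (fun N => Series (e N)) 0).
  { apply (is_lim_Series_dominated e D); [| apply ex_series_rep_bound |].
    - intros N k. destruct (besov_norm_ball_tail_le n w p q hp hq N (y k) (Hy k)) as [_ h].
      pose proof (besov_norm_ge0 n w p q (ball_tail n N (y k))). destruct (Hd k) as [hM _].
      unfold e; split; nra.
    - intros k. unfold e. replace (Finite 0) with (Rbar_mult (M k) 0) by (simpl; f_equal; ring).
      apply is_lim_seq_scal_l, is_lim_ball_tail; auto. }
  apply filterlim_C_iff. intros eps heps. apply is_lim_seq_spec in HS.
  destruct (HS (mkposreal eps heps)) as [N0 HN0]. exists N0. intros N hN.
  specialize (HN0 N hN); simpl in HN0. rewrite Rminus_0_r in HN0.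
  eapply Rle_lt_trans; [apply Cmod_ball_sum_sub_le; auto | eapply Rle_lt_trans; [apply Rle_abs | auto]].
Qed.

End Trace.

(** * From balls to boxes *)

Definition memb (L : list (list Z)) (x : list Z) : bool :=
  if in_dec (list_eq_dec Z.eq_dec) x L then true else false.

Lemma memb_true L x : memb L x = true <-> In x L.
Proof. unfold memb; destruct (in_dec _ x L); split; auto; discriminate. Qed.

Lemma csum_filter_split {A} (L : list A) f (g : A -> bool) :
  csum L f = (csum (filter g L) f + csum (filter (fun x => negb (g x)) L) f)%C.
Proof. induction L as [|x L IH]; [unfold csum; simpl; ring |]. simpl. destruct (g x); simpl; rewrite !csum_cons, IH; ring. Qed.

Lemma csum_perm {A} (L L' : list A) f : Permutation L L' -> csum L f = csum L' f.
Proof.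
  unfold csum; induction 1 as [|x l l' h IH|x y l|l l' l'' h1 IH1 h2 IH2]; simpl; auto.
  - rewrite IH; auto.
  - ring.
  - congruence.
Qed.

Lemma rsum_filter_le {A} (L : list A) f g : (forall x, 0 <= g x) -> rsum (filter f L) g <= rsum L g.
Proof.
  unfold rsum; intros H; induction L as [|x L IH]; simpl; [lra |].
  destruct (f x); simpl; specialize (H x); lra.
Qed.

Lemma filter_false {A} (L : list A) f : (forall x, In x L -> f x = false) -> filter f L = [].
Proof.
  induction L as [|x L IH]; intros H; simpl; auto.
  rewrite H by (left; auto). apply IH; intros; apply H; right; auto.
Qed.

Lemma rsum_ball_tail_le n (g : list Z -> R) C s J d : 0 <= s < 1 -> (forall x, 0 <= g x) ->
  (forall j, rsum (shell n j) g <= C * s ^ j) ->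
  rsum (filter (fun x => negb (memb (ball n J) x)) (ball n (J + d))) g <= C * (s ^ S J - s ^ S (J + d)) / (1 - s).
Proof.
  intros hs hg H. induction d as [|d IH].
  - rewrite Nat.add_0_r. replace (filter _ _) with (@nil (list Z)).
    + unfold rsum; simpl. right; field; lra.
    + symmetry. apply filter_false. intros x hx. apply memb_true in hx. rewrite hx; reflexivity.
  - rewrite Nat.add_succ_r. simpl ball. rewrite filter_app, rsum_app.
    pose proof (rsum_filter_le (shell n (S (J + d))) (fun x => negb (memb (ball n J) x)) g hg).
    pose proof (H (S (J + d))).
    replace (C * (s ^ S J - s ^ S (S (J + d))) / (1 - s))
      with (C * (s ^ S J - s ^ S (J + d)) / (1 - s) + C * s ^ S (J + d)) by (simpl; field; lra).
    lra.
Qed.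

Lemma box_sum_split n (a : list Z -> C) J N' : (2 ^ S J <= N')%nat ->
  box_sum n a N' = (ball_sum n a J + csum (filter (fun x => negb (memb (ball n J) x)) (box n N')) a)%C.
Proof.
  intros hN. unfold box_sum. fold (csum (box n N') a). rewrite (csum_filter_split _ _ (memb (ball n J))).
  f_equal. apply csum_perm, NoDup_Permutation; [apply NoDup_filter, NoDup_box | apply NoDup_ball |].
  intros x. rewrite filter_In, memb_true. split; [tauto |]. intros h; split; auto.
  eapply ball_incl_box; eauto.
Qed.

Section BoxSum.
Variables (n : nat) (m Ca : R) (a : list Z -> C).
Hypothesis ha : forall xi, length xi = n -> Cmod (a xi) <= Ca * japbr_pow xi m.
Hypothesis hm0 : m <= 0.
Hypothesis hnm : INR n + m < 0.

Local Notation s := (shell_ratio n m).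

Lemma rsum_shell_symbol_le j : rsum (shell n j) (fun x => Cmod (a x)) <= 8 ^ n * Ca * s ^ j.
Proof.
  pose proof (symbol_const_ge0 n m Ca a ha). pose proof (exp_pos (m * ln 2)) as hr.
  eapply Rle_trans; [apply (rsum_shell_le _ _ _ (Ca * Rpower 2 m ^ j)) |].
  - intros x hx. apply (Cmod_symbol_le_shell n m Ca a ha hm0); auto.
  - apply Rmult_le_pos; [| apply pow_le]; unfold Rpower; lra.
  - unfold shell_ratio. rewrite Rpow_mult_distr. right; ring.
Qed.

Lemma Cmod_csum_outside_ball_le J N' :
  Cmod (csum (filter (fun x => negb (memb (ball n J) x)) (box n N')) a) <=
  8 ^ n * Ca / (1 - s) * s ^ S J.
Proof.
  pose proof (shell_ratio_bounds n m hnm) as hs. pose proof (symbol_const_ge0 n m Ca a ha).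
  set (d := (n * N' * N')%nat).
  eapply Rle_trans; [apply Cmod_csum |].
  eapply Rle_trans; [apply (rsum_incl _ (filter (fun x => negb (memb (ball n J) x)) (ball n (J + d)))) |].
  - apply NoDup_filter, NoDup_box.
  - intros x hx. apply filter_In in hx; apply filter_In. destruct hx as [hx hneg]. split; auto.
    apply box_incl_ball in hx. destruct (ball_prefix n (n * N' * N') (J + d) ltac:(unfold d; lia)) as [rr ->].
    apply in_app_iff; auto.
  - intros; apply Cmod_ge_0.
  - eapply Rle_trans; [apply (rsum_ball_tail_le n _ (8 ^ n * Ca) s J d);
      [lra | intros; apply Cmod_ge_0 | apply rsum_shell_symbol_le] |].
    pose proof (pow_le s (S (J + d)) ltac:(lra)); pose proof (pow_le 8 n ltac:(lra)).
    assert (0 < / (1 - s)) by (apply Rinv_0_lt_compat; lra). unfold Rdiv.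
    assert (0 <= 8 ^ n * Ca) by nra.
    assert (0 <= 8 ^ n * Ca * s ^ S (J + d) * / (1 - s)) by (apply Rmult_le_pos; [apply Rmult_le_pos |]; lra).
    nra.
Qed.

Lemma box_sum_lim T : filterlim (ball_sum n a) eventually (locally T) ->
  filterlim (box_sum n a) eventually (locally T).
Proof.
  intros HT. pose proof (proj1 (filterlim_C_iff _ _) HT) as HT'. apply filterlim_C_iff. intros eps he.
  pose proof (shell_ratio_bounds n m hnm) as hs. pose proof (symbol_const_ge0 n m Ca a ha).
  set (Ct := 8 ^ n * Ca / (1 - s)).
  assert (hCt : 0 <= Ct) by (unfold Ct; pose proof (pow_le 8 n ltac:(lra));
    apply Rmult_le_pos; [nra | left; apply Rinv_0_lt_compat; lra]).
  assert (HL : is_lim_seq (fun J => Ct * s ^ J) 0).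
  { replace (Finite 0) with (Rbar_mult Ct 0) by (simpl; f_equal; ring).
    apply is_lim_seq_scal_l, is_lim_seq_geom. rewrite Rabs_right; lra. }
  apply is_lim_seq_spec in HL. destruct (HL (mkposreal (eps / 2) ltac:(lra))) as [N2 HN2].
  destruct (HT' (eps / 2) ltac:(lra)) as [N1 HN1].
  set (J := Nat.max N1 N2). exists (2 ^ S J)%nat. intros N' hN'.
  rewrite (box_sum_split n a J N' hN').
  specialize (HN1 J ltac:(unfold J; lia)). specialize (HN2 (S J) ltac:(unfold J; lia)).
  cbn [pos] in HN2. pose proof (pow_le s (S J) ltac:(lra)).
  pose proof (Cmod_csum_outside_ball_le J N'). fold Ct in H1.
  rewrite Rminus_0_r, Rabs_right in HN2 by nra.
  replace (ball_sum n a J + _ - T)%C with (ball_sum n a J - T + csum (filter (fun x => negb (memb (ball n J) x)) (box n N')) a)%C by ring.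
  eapply Rle_lt_trans; [apply Cmod_triangle | lra].
Qed.

End BoxSum.

Lemma corollary_exponents n r alpha p1 m : 0 < r <= 1 -> 0 < alpha -> 1 < p1 ->
  m < - INR n / r - alpha * INR n ->
  0 < / (alpha + / conj_exp p1) /\ m <= 0 /\ INR n + m < 0 /\ INR n + m * r < 0.
Proof.
  intros hr hal hp1 hm. pose proof (pos_INR n) as hn0.
  assert (hnr : INR n <= INR n / r).
  { unfold Rdiv. rewrite <- (Rmult_1_r (INR n)) at 1. apply Rmult_le_compat_l; auto.
    rewrite <- Rinv_1. apply Rinv_le_contravar; lra. }
  assert (E : - INR n / r * r = - INR n) by (field; lra).
  assert (0 <= alpha * INR n) by nra. assert (0 <= alpha * INR n * r) by nra.
  assert (m * r < (- INR n / r - alpha * INR n) * r) by (apply Rmult_lt_compat_r; lra).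
  repeat split; [| lra | lra | nra].
  apply Rinv_0_lt_compat. unfold conj_exp.
  assert (0 < / (p1 / (p1 - 1))) by (apply Rinv_0_lt_compat, Rdiv_lt_0_compat; lra). lra.
Qed.

Theorem corollary5p2 (n : nat) (r alpha p1 m Ca : R) (a : list Z -> C) :
  0 < r <= 1 ->
  0 < alpha <= 1 / 2 ->
  (forall xi : list Z, length xi = n -> Cmod (a xi) <= Ca * japbr_pow xi m) ->
  1 < p1 <= 2 ->
  m < - INR n / r - alpha * INR n ->
  forall w : R,
    r_nuclear n w p1 (/ (alpha + / conj_exp p1)) r (Tmult a) /\
    exists S : C,
      filterlim (box_sum n a) eventually (locally S) /\
      (forall phi M y,
         nuclear_rep n w p1 (/ (alpha + / conj_exp p1)) r (Tmult a) phi M y ->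
         is_series (fun k => phi k (y k)) S).
Proof.
  intros hr [hal _] ha [hp1 _] hm w.
  destruct (corollary_exponents n r alpha p1 m hr hal hp1 hm) as [hq [hm0 [hnm hnmr]]].
  set (q := / (alpha + / conj_exp p1)) in *. assert (hp : 1 <= p1) by lra.
  pose proof (nuclear_rep_mult n w p1 q r m Ca a hp hq (proj1 hr) ha hm0 hnm hnmr) as HR.
  destruct (nuclear_trace_ball_sum n w p1 q r m Ca a hp hq hr ha hm0 hnm _ _ _ HR) as [T [_ HT]].
  split; [split; [intros c hc; apply (in_besov_Tmult n m Ca a ha hm0 hnm); auto | eauto] |].
  exists T. split; [exact (box_sum_lim n m Ca a ha hm0 hnm T HT) |].
  intros phi M y Hr.
  destruct (nuclear_trace_ball_sum n w p1 q r m Ca a hp hq hr ha hm0 hnm _ _ _ Hr) as [T' [HS HT']].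
  rewrite (@filterlim_locally_unique nat C_AbsRing C_NormedModule eventually _ _ _ _ HT HT').
  exact HS.
Qed.
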